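(* Consider the SEIRUC system \[ \begin{aligned} S'(t)&=\Lambda-\frac{\beta S(t)}{N(t)}\bigl(I(t)+U(t)+R(t)\bigr)-\delta S(t),\\ E'(t)&=\frac{\beta S(t)}{N(t)}\bigl(I(t)+U(t)+R(t)\bigr)-(a+\delta_1+c_1)E(t),\\ I'(t)&=aE(t)-(\gamma+\delta_2+c_2)I(t),\\ R'(t)&=\gamma q I(t)-(\delta_3+c_3)R(t)+\eta U(t),\\ U'(t)&=\gamma(1-q)I(t)-(\delta_4+c_4)U(t)-\eta U(t),\\ C'(t)&=c_1E(t)+c_2I(t)+c_3R(t)+c_4U(t)-\delta_5C(t), \end{aligned} \] where $N(t)=S(t)+E(t)+I(t)+R(t)+U(t)+C(t)$. Let $\theta_1=a+\delta_1+c_1$, $\theta_2=\gamma+\delta_2+c_2$, $\theta_3=\delta_3+c_3$, $\theta_4=\delta_4+c_4+\eta$, $\mathcal{P}=\gamma(1-q)(\eta+\theta_3)+\theta_4(\theta_3+q\gamma)$, and \[ \mathcal{R}_0=\frac{a\beta\Lambda\mathcal{P}}{N\delta\theta_1\theta_2\theta_3\theta_4}, \] where $N=\Lambda/\delta$ is the total population at the disease-free equilibrium (so $\mathcal{R}_0=\frac{a\beta\mathcal{P}}{\theta_1\theta_2\theta_3\theta_4}$). Then the disease-free equilibrium $\mathcal{E}_0=(\Lambda/\delta,0,0,0,0,0)$ is locally asymptotically stable if $\mathcal{R}_0<1$ and unstable if $\mathcal{R}_0>1$.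
   Context: All parameters $\Lambda,\beta,\delta,a,\gamma,\eta,\delta_1,\dots,\delta_5,c_1,\dots,c_4$ are positive constants and $q\in[0,1]$. $\mathcal{R}_0$ is the basic reproduction number, obtained as the spectral radius of the next-generation matrix. *)

From Stdlib Require Import Reals.
From Coquelicot Require Import Coquelicot.
Open Scope R_scope.

Record params := mkParams {
  Lambda : R; beta : R; delta : R; a : R; gamma : R; eta : R; q : R;
  delta1 : R; delta2 : R; delta3 : R; delta4 : R; delta5 : R;
  c1 : R; c2 : R; c3 : R; c4 : R }.

Definition admissible (p : params) : Prop :=
  0 < Lambda p /\ 0 < beta p /\ 0 < delta p /\ 0 < a p /\ 0 < gamma p /\
  0 < eta p /\ 0 < delta1 p /\ 0 < delta2 p /\ 0 < delta3 p /\
  0 < delta4 p /\ 0 < delta5 p /\ 0 < c1 p /\ 0 < c2 p /\ 0 < c3 p /\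
  0 < c4 p /\ 0 <= q p <= 1.

Record state := mkState { sS : R; sE : R; sI : R; sR : R; sU : R; sC : R }.

Definition totalN (x : state) : R :=
  sS x + sE x + sI x + sR x + sU x + sC x.

Definition force (p : params) (x : state) : R :=
  beta p * sS x / totalN x * (sI x + sU x + sR x).

Definition fS (p : params) (x : state) : R :=
  Lambda p - force p x - delta p * sS x.
Definition fE (p : params) (x : state) : R :=
  force p x - (a p + delta1 p + c1 p) * sE x.
Definition fI (p : params) (x : state) : R :=
  a p * sE x - (gamma p + delta2 p + c2 p) * sI x.
Definition fR (p : params) (x : state) : R :=
  gamma p * q p * sI x - (delta3 p + c3 p) * sR x + eta p * sU x.
Definition fU (p : params) (x : state) : R :=
  gamma p * (1 - q p) * sI x - (delta4 p + c4 p) * sU x - eta p * sU x.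
Definition fC (p : params) (x : state) : R :=
  c1 p * sE x + c2 p * sI x + c3 p * sR x + c4 p * sU x - delta5 p * sC x.

Definition theta1 (p : params) := a p + delta1 p + c1 p.
Definition theta2 (p : params) := gamma p + delta2 p + c2 p.
Definition theta3 (p : params) := delta3 p + c3 p.
Definition theta4 (p : params) := delta4 p + c4 p + eta p.
Definition PP (p : params) :=
  gamma p * (1 - q p) * (eta p + theta3 p) + theta4 p * (theta3 p + q p * gamma p).
Definition Ndfe (p : params) := Lambda p / delta p.
Definition basic_R0 (p : params) :=
  a p * beta p * Lambda p * PP p /
  (Ndfe p * delta p * theta1 p * theta2 p * theta3 p * theta4 p).

Definition E0 (p : params) : state := mkState (Lambda p / delta p) 0 0 0 0 0.

Definition dist_st (x y : state) : R :=
  Rmax (Rabs (sS x - sS y)) (Rmax (Rabs (sE x - sE y)) (Rmax (Rabs (sI x - sI y))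
  (Rmax (Rabs (sR x - sR y)) (Rmax (Rabs (sU x - sU y)) (Rabs (sC x - sC y)))))).

Definition is_solution (p : params) (x : R -> state) : Prop :=
  (forall t, 0 < t ->
     is_derive (fun s => sS (x s)) t (fS p (x t)) /\
     is_derive (fun s => sE (x s)) t (fE p (x t)) /\
     is_derive (fun s => sI (x s)) t (fI p (x t)) /\
     is_derive (fun s => sR (x s)) t (fR p (x t)) /\
     is_derive (fun s => sU (x s)) t (fU p (x t)) /\
     is_derive (fun s => sC (x s)) t (fC p (x t))) /\
  (forall eps, 0 < eps -> exists d, 0 < d /\
     forall t, 0 <= t < d -> dist_st (x t) (x 0) < eps).

Definition lyapunov_stable (p : params) (e : state) : Prop :=
  forall eps, 0 < eps -> exists d, 0 < d /\
    forall x, is_solution p x -> dist_st (x 0) e < d ->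
      forall t, 0 <= t -> dist_st (x t) e < eps.

Definition locally_attractive (p : params) (e : state) : Prop :=
  exists d, 0 < d /\
    forall x, is_solution p x -> dist_st (x 0) e < d ->
      forall eps, 0 < eps -> exists T, forall t, T <= t -> dist_st (x t) e < eps.

Definition locally_asymptotically_stable (p : params) (e : state) : Prop :=
  lyapunov_stable p e /\ locally_attractive p e.

Definition unstable (p : params) (e : state) : Prop := ~ lyapunov_stable p e.

From Stdlib Require Import Reals Lra Lia Classical.
From Coquelicot Require Import Coquelicot.
Open Scope R_scope.

(* Near [E0] the ratio [S / N] is close to [1], and suitable weights [wE], [wI], [wR], [wU] make the
   derivative of [V = wE E + wI I + wR R + wU U] have the sign of [R0 - 1], with size proportional
   to the infected mass.
   If [R0 < 1], adding [|S - Ndfe|] and [|C|] with small weights and taking absolute values of all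
   components gives a Lyapunov function for arbitrary (not necessarily nonnegative) solutions: its
   right Dini derivative is at most [- decay_rate] times the l1 distance to [E0], which yields both
   stability and attractivity.
   If [R0 > 1], the solution through [(Ndfe, z, 0, 0, 0, 0)], obtained by Picard iteration of the
   field clamped to a positively invariant box, stays nonnegative; as long as it stays near [E0],
   [V] grows linearly along it, so it leaves a fixed neighbourhood of [E0] however small [z] is. *)

(** * Continuity and one-sided comparison *)

Lemma continuous_R_iff (f : R -> R) (t : R) :
  continuous f t <->
  forall e, 0 < e -> exists d, 0 < d /\ forall s, Rabs (s - t) < d -> Rabs (f s - f t) < e.
Proof.
  split.
  - intros Hf e He. destruct (proj1 (filterlim_locally _ _) Hf (mkposreal e He)) as [[d Hd] Hball].
    exists d. split; [exact Hd|]. intros s Hs. apply (Hball s Hs).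
  - intros Hf. apply filterlim_locally. intros [e He].
    destruct (Hf e He) as [d [Hd Hball]]. exists (mkposreal d Hd). intros s Hs. apply (Hball s Hs).
Qed.

Definition right_continuous (f : R -> R) (a : R) :=
  forall e, 0 < e -> exists d, 0 < d /\ forall s, a <= s < a + d -> Rabs (f s - f a) < e.

Lemma continuous_right_continuous f a : continuous f a -> right_continuous f a.
Proof.
  intros Hf e He. destruct (proj1 (continuous_R_iff f a) Hf e He) as [d [Hd Hball]].
  exists d. split; [exact Hd|]. intros s Hs. apply Hball. rewrite Rabs_right; lra.
Qed.

Lemma real_induction (a : R) (Q : R -> Prop) :
  (exists d, 0 < d /\ forall s, a <= s < a + d -> Q s) ->
  (forall c, a < c -> (forall s, a <= s < c -> Q s) ->
     exists d, 0 < d /\ forall s, a <= s < c + d -> Q s) ->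
  forall t, a <= t -> Q t.
Proof.
  intros [d0 [Hd0 Hstart]] Hstep t Ht.
  apply NNPP. intros HQt.
  set (good := fun c => a <= c <= t /\ forall s, a <= s < c -> Q s).
  assert (Hstart_t : a + d0 <= t).
  { apply Rnot_lt_le. intros Hlt. apply HQt, Hstart. lra. }
  assert (Hgood0 : good (a + d0)) by (split; [lra | exact Hstart]).
  destruct (completeness good) as [m [Hub Hlub]].
  { exists t. intros c [Hc _]. apply Hc. }
  { exists (a + d0). exact Hgood0. }
  assert (Ham : a + d0 <= m) by (apply Hub, Hgood0).
  assert (Hmt : m <= t) by (apply Hlub; intros c [Hc _]; apply Hc).
  assert (Hbelow : forall s, a <= s < m -> Q s).
  { intros s Hs. apply NNPP. intros HQs.
    assert (m <= s); [|lra].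
    apply Hlub. intros c [Hc Hgood]. apply Rnot_lt_le. intros Hsc. apply HQs, Hgood. lra. }
  destruct (Hstep m ltac:(lra) Hbelow) as [d [Hd Hext]].
  destruct (Rlt_le_dec t (m + d)) as [Htd | Hdt].
  - apply HQt, Hext. lra.
  - assert (m + d / 2 <= m); [|lra].
    apply Hub. split; [lra|]. intros s Hs. apply Hext. lra.
Qed.

Lemma is_derive_continuous (f : R -> R) (t l : R) : is_derive f t l -> continuous f t.
Proof. intros Hf. apply (ex_derive_continuous (K := R_AbsRing) (V := R_NormedModule)). now exists l. Qed.

Lemma is_derive_sub_const (f : R -> R) (t l c : R) :
  is_derive f t l -> is_derive (fun s => f s - c) t l.
Proof.
  intros Hf. replace l with (minus l 0) by (unfold minus, plus, opp; simpl; ring).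
  apply (is_derive_minus f (fun _ => c));
    [exact Hf | exact (is_derive_const (K := R_AbsRing) (V := R_NormedModule) c t)].
Qed.

Definition right_dini_le (f : R -> R) (s g : R) :=
  forall e, 0 < e -> exists d, 0 < d /\ forall h, 0 < h < d -> f (s + h) <= f s + h * (g + e).

Lemma right_dini_le_weaken f s g g' : g <= g' -> right_dini_le f s g -> right_dini_le f s g'.
Proof.
  intros Hg Hf e He. destruct (Hf e He) as [d [Hd Hb]].
  exists d. split; [exact Hd|]. intros h Hh. specialize (Hb h Hh). nra.
Qed.

Lemma right_dini_le_plus f1 f2 s g1 g2 :
  right_dini_le f1 s g1 -> right_dini_le f2 s g2 ->
  right_dini_le (fun t => f1 t + f2 t) s (g1 + g2).
Proof.
  intros H1 H2 e He.
  destruct (H1 (e / 2) ltac:(lra)) as [d1 [Hd1 B1]].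
  destruct (H2 (e / 2) ltac:(lra)) as [d2 [Hd2 B2]].
  exists (Rmin d1 d2). split; [now apply Rmin_pos|].
  intros h Hh. pose proof (Rmin_l d1 d2). pose proof (Rmin_r d1 d2).
  specialize (B1 h ltac:(lra)). specialize (B2 h ltac:(lra)). nra.
Qed.

Lemma right_dini_le_scal f s g c :
  0 <= c -> right_dini_le f s g -> right_dini_le (fun t => c * f t) s (c * g).
Proof.
  intros Hc Hf e He. destruct (Hf (e / (c + 1)) ltac:(apply Rdiv_lt_0_compat; lra)) as [d [Hd Hb]].
  exists d. split; [exact Hd|]. intros h Hh. specialize (Hb h Hh).
  assert (c * (e / (c + 1)) <= e).
  { apply Rmult_le_reg_r with (c + 1); [lra|].
    replace (c * (e / (c + 1)) * (c + 1)) with (c * e) by (field; lra). nra. }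
  nra.
Qed.

Lemma is_derive_right_dini_le f s l : is_derive f s l -> right_dini_le f s l.
Proof.
  intros Hf e He. apply is_derive_Reals in Hf. destruct (Hf e He) as [[d Hd] Hb].
  exists d. split; [exact Hd|]. intros h Hh. simpl in Hb.
  specialize (Hb h ltac:(lra) ltac:(rewrite Rabs_right; lra)).
  apply Rabs_def2 in Hb.
  replace (f (s + h)) with (f s + h * ((f (s + h) - f s) / h)) by (field; lra). nra.
Qed.

(* For small [h > 0], [y (s + h) = (1 - h k) y s + h (l + k y s) + o(h)] with [1 - h k >= 0]. *)
Lemma is_derive_Rabs_right_dini_le y s l k B :
  is_derive y s l -> 0 <= k -> Rabs (l + k * y s) <= B ->
  right_dini_le (fun t => Rabs (y t)) s (- k * Rabs (y s) + B).
Proof.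
  intros Hy Hk HB e He. apply is_derive_Reals in Hy. destruct (Hy e He) as [[d Hd] Hb].
  exists (Rmin d (1 / (1 + k))). split; [apply Rmin_pos; [lra | apply Rdiv_lt_0_compat; lra]|].
  intros h Hh. simpl in Hb. pose proof (Rmin_l d (1 / (1 + k))). pose proof (Rmin_r d (1 / (1 + k))).
  assert (Hscale : 0 <= 1 - h * k).
  { assert (h * (1 + k) <= 1); [|nra].
    apply Rmult_le_reg_r with (/ (1 + k)); [apply Rinv_0_lt_compat; lra|].
    rewrite Rmult_assoc, Rinv_r by lra. unfold Rdiv in *. lra. }
  specialize (Hb h ltac:(lra) ltac:(rewrite Rabs_right; lra)).
  set (r := (y (s + h) - y s) / h - l) in Hb.
  replace (y (s + h)) with ((1 - h * k) * y s + h * (l + k * y s) + h * r) by (unfold r; field; lra).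
  eapply Rle_trans; [apply Rabs_triang|].
  eapply Rle_trans; [apply Rplus_le_compat_r, Rabs_triang|].
  rewrite !Rabs_mult, (Rabs_right (1 - h * k)), (Rabs_right h) by lra.
  nra.
Qed.

Lemma continuous_le_left (f g : R -> R) (a c : R) :
  a < c -> continuous f c -> continuous g c ->
  (forall s, a <= s < c -> f s <= g s) -> f c <= g c.
Proof.
  intros Hac Hf Hg Hle. apply Rnot_lt_le. intros Hlt.
  destruct (proj1 (continuous_R_iff (fun s => f s - g s) c) (continuous_minus f g c Hf Hg)
              (f c - g c) ltac:(lra)) as [d [Hd Hb]].
  set (s := Rmax a (c - d / 2)).
  assert (Hs : a <= s < c /\ c - s <= d / 2)
    by (unfold s; pose proof (Rmax_l a (c - d / 2)); pose proof (Rmax_r a (c - d / 2));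
        split; [split; [lra | apply Rmax_lub_lt; lra] | lra]).
  specialize (Hb s ltac:(rewrite Rabs_left; lra)). specialize (Hle s (proj1 Hs)).
  apply Rabs_def2 in Hb. lra.
Qed.

Lemma right_dini_decrease_eps (f : R -> R) (a b L e : R) :
  a <= b -> 0 < e -> right_continuous f a ->
  (forall c, a < c <= b -> continuous f c) ->
  (forall s, a < s < b -> right_dini_le f s (- L)) ->
  f b <= f a - (L - e) * (b - a) + e.
Proof.
  intros Hab He Hfa Hf Hdini.
  set (bound := fun s => f a - (L - e) * (s - a) + e).
  assert (Hbound : forall c, continuous bound c).
  { intros c. apply (is_derive_continuous _ _ (- (L - e))). unfold bound. auto_derive; [exact I | ring]. }
  enough (H : forall t, a <= t -> t <= b -> f t <= bound t) by (apply H; lra).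
  apply (real_induction a (fun t => t <= b -> f t <= bound t)).
  - destruct (Hfa (e / 2) ltac:(lra)) as [d [Hd Hb]].
    set (k := 2 * (Rabs (L - e) + 1)).
    assert (Hk : 0 < k) by (unfold k; pose proof (Rabs_pos (L - e)); lra).
    exists (Rmin d (e / k)). split; [apply Rmin_pos; [lra | now apply Rdiv_lt_0_compat]|].
    intros s Hs _. pose proof (Rmin_l d (e / k)). pose proof (Rmin_r d (e / k)).
    specialize (Hb s ltac:(lra)). apply Rabs_def2 in Hb.
    assert ((s - a) * k <= e).
    { apply Rmult_le_reg_r with (/ k); [now apply Rinv_0_lt_compat|].
      rewrite Rmult_assoc, Rinv_r by lra. unfold Rdiv in *. lra. }
    assert ((L - e) * (s - a) <= e / 2).
    { pose proof (Rle_abs (L - e)). unfold k in *. nra. }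
    unfold bound. lra.
  - intros c Hac Hbelow.
    destruct (Rlt_le_dec b c) as [Hbc | Hcb].
    { exists 1. split; [lra|]. intros s Hs Hsb. apply Hbelow; lra. }
    assert (Hc : f c <= bound c).
    { apply (continuous_le_left f bound a c Hac (Hf c ltac:(lra)) (Hbound c)).
      intros s Hs. apply Hbelow; lra. }
    destruct (Req_dec c b) as [-> | Hcb'].
    { exists 1. split; [lra|]. intros s Hs Hsb.
      destruct (Req_dec s b) as [-> | Hsb']; [exact Hc | apply Hbelow; lra]. }
    destruct (Hdini c ltac:(lra) e He) as [d [Hd Hb]].
    exists d. split; [exact Hd|]. intros s Hs Hsb.
    destruct (Rlt_le_dec s c) as [Hsc | Hcs]; [apply Hbelow; lra|].
    destruct (Req_dec s c) as [-> | Hsc']; [exact Hc|].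
    specialize (Hb (s - c) ltac:(lra)). replace (c + (s - c)) with s in Hb by ring.
    unfold bound in *. nra.
Qed.

Lemma right_dini_decrease (f : R -> R) (a b L : R) :
  a <= b -> right_continuous f a ->
  (forall c, a < c <= b -> continuous f c) ->
  (forall s, a < s < b -> right_dini_le f s (- L)) ->
  f b <= f a - L * (b - a).
Proof.
  intros Hab Hfa Hf Hdini. apply Rle_plus_epsilon. intros eps Heps.
  set (e := eps / (b - a + 1)).
  assert (He : 0 < e) by (apply Rdiv_lt_0_compat; lra).
  pose proof (right_dini_decrease_eps f a b L e Hab He Hfa Hf Hdini).
  assert (e * (b - a + 1) = eps) by (unfold e; field; lra).
  nra.
Qed.

Lemma derive_decrease (f : R -> R) (a b L : R) :
  a <= b -> right_continuous f a ->
  (forall s, a < s <= b -> exists l, is_derive f s l /\ l <= - L) ->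
  f b <= f a - L * (b - a).
Proof.
  intros Hab Hfa Hder. apply right_dini_decrease; [exact Hab | exact Hfa | |].
  - intros c Hc. destruct (Hder c Hc) as [l [Hl _]]. exact (is_derive_continuous f c l Hl).
  - intros s Hs. destruct (Hder s ltac:(lra)) as [l [Hl Hle]].
    apply right_dini_le_weaken with l; [exact Hle | now apply is_derive_right_dini_le].
Qed.

Lemma derive_increase (f : R -> R) (a b L : R) :
  a <= b -> right_continuous f a ->
  (forall s, a < s <= b -> exists l, is_derive f s l /\ L <= l) ->
  f a + L * (b - a) <= f b.
Proof.
  intros Hab Hfa Hder.
  enough (- f b <= - f a - L * (b - a)) by lra.
  apply (derive_decrease (fun s => - f s)); [exact Hab | |].
  - intros e He. destruct (Hfa e He) as [d [Hd Hb]]. exists d. split; [exact Hd|].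
    intros s Hs. rewrite <- Rabs_Ropp. replace (- (- f s - - f a)) with (f s - f a) by ring. now apply Hb.
  - intros s Hs. destruct (Hder s Hs) as [l [Hl Hle]]. exists (- l). split.
    + exact (is_derive_opp f s l Hl).
    + lra.
Qed.

Lemma lower_barrier (y g : R -> R) (lo : R) :
  (forall t, 0 <= t -> continuous y t) ->
  (forall t, 0 < t -> is_derive y t (g t)) ->
  (forall t, 0 < t -> y t < lo -> 0 <= g t) ->
  lo <= y 0 -> forall t, 0 <= t -> lo <= y t.
Proof.
  intros Hy Hder Hpush H0 t Ht. apply Rnot_lt_le. intros Hlt.
  set (above := fun c => 0 <= c <= t /\ lo <= y c).
  destruct (completeness above) as [m [Hub Hlub]].
  { exists t. intros c [Hc _]. apply Hc. }
  { exists 0. split; lra. }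
  assert (Hm0 : 0 <= m) by (apply Hub; split; lra).
  assert (Hmt : m <= t) by (apply Hlub; intros c [Hc _]; apply Hc).
  assert (Hym : lo <= y m).
  { apply Rnot_lt_le. intros Hym.
    destruct (proj1 (continuous_R_iff y m) (Hy m Hm0) (lo - y m) ltac:(lra)) as [d [Hd Hb]].
    assert (m <= m - d / 2); [|lra].
    apply Hlub. intros c [Hc Hyc]. apply Rnot_lt_le. intros Hcm.
    assert (c <= m) by (apply Hub; split; assumption).
    specialize (Hb c ltac:(rewrite Rabs_left1; lra)). apply Rabs_def2 in Hb. lra. }
  assert (Hmt' : m < t) by (destruct (Req_dec m t) as [-> | ]; lra).
  assert (Hafter : forall s, m < s <= t -> y s < lo).
  { intros s Hs. apply Rnot_le_lt. intros Hys.
    assert (s <= m) by (apply Hub; split; [lra | exact Hys]). lra. }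
  assert (y m + 0 * (t - m) <= y t); [|lra].
  apply derive_increase; [lra | now apply continuous_right_continuous, Hy |].
  intros s Hs. exists (g s). split; [apply Hder; lra | exact (Hpush s ltac:(lra) (Hafter s Hs))].
Qed.

Lemma interval_invariant (y g : R -> R) (lo hi : R) :
  (forall t, 0 <= t -> continuous y t) ->
  (forall t, 0 < t -> is_derive y t (g t)) ->
  (forall t, 0 < t -> y t < lo -> 0 <= g t) ->
  (forall t, 0 < t -> hi < y t -> g t <= 0) ->
  lo <= y 0 <= hi -> forall t, 0 <= t -> lo <= y t <= hi.
Proof.
  intros Hy Hder Hlo Hhi H0 t Ht. split.
  - exact (lower_barrier y g lo Hy Hder Hlo (proj1 H0) t Ht).
  - assert (- hi <= - y t); [|lra].
    apply (lower_barrier (fun s => - y s) (fun s => - g s) (- hi)); [| | | lra | exact Ht].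
    + intros s Hs. apply (continuous_opp y), Hy, Hs.
    + intros s Hs. apply (is_derive_opp y s (g s)), Hder, Hs.
    + intros s Hs Hys. specialize (Hhi s Hs ltac:(lra)). lra.
Qed.

Lemma linear_growth (W : R -> R) (k : R) : 0 < k -> right_continuous W 0 ->
  (forall s, 0 < s -> exists l, is_derive W s l /\ k * W s <= l) ->
  (forall s, 0 <= s -> 0 <= W s) ->
  forall t, 0 <= t -> W 0 * (1 + k * t) <= W t.
Proof.
  intros Hk HW0 Hder Hpos t Ht.
  assert (Hmono : forall s, 0 <= s -> W 0 <= W s).
  { intros s Hs. enough (W 0 + 0 * (s - 0) <= W s) by lra.
    apply derive_increase; [exact Hs | exact HW0 |].
    intros u Hu. destruct (Hder u ltac:(lra)) as [l [Hl Hle]]. exists l. split; [exact Hl|].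
    pose proof (Hpos u ltac:(lra)). nra. }
  enough (W 0 + k * W 0 * (t - 0) <= W t) by lra.
  apply derive_increase; [exact Ht | exact HW0 |].
  intros u Hu. destruct (Hder u ltac:(lra)) as [l [Hl Hle]]. exists l. split; [exact Hl|].
  pose proof (Hmono u ltac:(lra)). nra.
Qed.

(** * Global solutions of globally Lipschitz systems *)

Lemma continuous_sum_f_R0 (F : R -> nat -> R) (N : nat) (t : R) :
  (forall j, (j <= N)%nat -> continuous (fun s => F s j) t) ->
  continuous (fun s => sum_f_R0 (F s) N) t.
Proof.
  induction N as [|N IH]; intros HF; simpl.
  - apply HF. lia.
  - apply (continuous_plus (fun s => sum_f_R0 (F s) N) (fun s => F s (S N))).
    + apply IH. intros j Hj. apply HF. lia.
    + apply HF. lia.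
Qed.

Lemma continuous_Rmax_0 (t : R) : continuous (Rmax 0) t.
Proof.
  apply continuous_R_iff. intros e He. exists e. split; [exact He|]. intros s Hs.
  eapply Rle_lt_trans; [|exact Hs].
  apply Rabs_le. pose proof (Rle_abs (s - t)). pose proof (Rle_abs (- (s - t))).
  rewrite Rabs_Ropp in *. unfold Rmax. destruct (Rle_dec 0 s), (Rle_dec 0 t); lra.
Qed.

Lemma is_derive_RInt_0 (g : R -> R) (t : R) :
  (forall s, continuous g s) -> is_derive (fun s => RInt g 0 s) t (g t).
Proof.
  intros Hg. apply (is_derive_RInt g (fun s => RInt g 0 s) 0 t); [|apply Hg].
  exists (mkposreal 1 Rlt_0_1). intros s _.
  apply (RInt_correct (V := R_CompleteNormedModule)), (ex_RInt_continuous (V := R_CompleteNormedModule)).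
  intros; apply Hg.
Qed.

Lemma RInt_scal_exp (c k t : R) :
  0 < k -> RInt (fun s => c * exp (k * s)) 0 t = c / k * (exp (k * t) - 1).
Proof.
  intros Hk. apply is_RInt_unique.
  replace (c / k * (exp (k * t) - 1)) with (minus (c / k * exp (k * t)) (c / k * exp (k * 0)))
    by (unfold minus, plus, opp; simpl; rewrite Rmult_0_r, exp_0; ring).
  apply (is_RInt_derive (V := R_CompleteNormedModule) (fun s => c / k * exp (k * s))).
  - intros s _. auto_derive; [exact I | field; lra].
  - intros s _. apply (is_derive_continuous _ _ (c * (k * exp (k * s)))). auto_derive; [exact I | ring].
Qed.

Lemma exp_le_compat (x y : R) : x <= y -> exp x <= exp y.
Proof. intros H. destruct (Req_dec x y) as [-> | Hne]; [lra | left; apply exp_increasing; lra]. Qed.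

Lemma geometric_eventually_lt (M e : R) : 0 <= M -> 0 < e ->
  exists N, forall k, (N <= k)%nat -> (/ 2) ^ k * M < e.
Proof.
  intros HM He.
  destruct (pow_lt_1_zero (/ 2) ltac:(rewrite Rabs_right; lra) (e / (M + 1))
              ltac:(apply Rdiv_lt_0_compat; lra)) as [N HN].
  exists N. intros k Hk. specialize (HN k Hk). rewrite Rabs_right in HN by (apply Rle_ge, pow_le; lra).
  pose proof (pow_le (/ 2) k ltac:(lra)).
  assert ((/ 2) ^ k * (M + 1) < e)
    by (apply Rmult_lt_reg_r with (/ (M + 1)); [apply Rinv_0_lt_compat; lra|];
        rewrite Rmult_assoc, Rinv_r, Rmult_1_r by lra; exact HN).
  nra.
Qed.

Lemma le_0_of_le_geometric (D M : R) : (forall k, D <= (/ 2) ^ k * M) -> D <= 0.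
Proof.
  intros HD. apply (is_lim_seq_le (fun _ => D) (fun k => (/ 2) ^ k * M) D 0 HD).
  - apply is_lim_seq_const.
  - replace (Finite 0) with (Rbar_mult 0 M) by (simpl; f_equal; ring).
    apply is_lim_seq_scal_r, is_lim_seq_geom. rewrite Rabs_right; lra.
Qed.

Lemma sum_f_R0_term_le (f : nat -> R) (N i : nat) :
  (forall j, 0 <= f j) -> (i <= N)%nat -> f i <= sum_f_R0 f N.
Proof.
  intros Hf. induction N as [|N IH]; intros Hi; simpl.
  - replace i with 0%nat by lia. lra.
  - destruct (Nat.eq_dec i (S N)) as [-> | Hne].
    + pose proof (cond_pos_sum f N Hf). lra.
    + specialize (IH ltac:(lia)). specialize (Hf (S N)). lra.
Qed.

Lemma ex_RInt_0_continuous (f : R -> R) (t : R) : (forall s, continuous f s) -> ex_RInt f 0 t.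
Proof. intros Hf. apply (ex_RInt_continuous (V := R_CompleteNormedModule)). intros; apply Hf. Qed.

Section Picard.

Variables (n : nat) (G : (nat -> R) -> nat -> R) (L : R) (x0 : nat -> R).
Hypothesis L_pos : 0 < L.
Hypothesis G_lipschitz : forall v w i, (i <= n)%nat ->
  Rabs (G v i - G w i) <= L * sum_f_R0 (fun j => Rabs (v j - w j)) n.

Lemma lipschitz_field_continuous (X : R -> nat -> R) (t : R) :
  (forall j, (j <= n)%nat -> continuous (fun s => X s j) t) ->
  forall i, (i <= n)%nat -> continuous (fun s => G (X s) i) t.
Proof.
  intros HX i Hi. apply continuous_R_iff. intros e He.
  assert (Hsum : continuous (fun s => sum_f_R0 (fun j => Rabs (X s j - X t j)) n) t).
  { apply (continuous_sum_f_R0 (fun s j => Rabs (X s j - X t j))). intros j Hj.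
    apply (continuous_Rabs_comp (fun s => X s j - X t j)),
          (continuous_minus (fun s => X s j) (fun _ => X t j)); [apply HX, Hj | apply continuous_const]. }
  destruct (proj1 (continuous_R_iff _ t) Hsum (e / L) ltac:(apply Rdiv_lt_0_compat; lra)) as [d [Hd Hb]].
  exists d. split; [exact Hd|]. intros s Hs. specialize (Hb s Hs).
  assert (H0 : sum_f_R0 (fun j => Rabs (X t j - X t j)) n = 0).
  { transitivity (sum_f_R0 (fun _ => 0) n); [|rewrite sum_cte; ring].
    apply sum_eq. intros j _. rewrite Rminus_eq_0. apply Rabs_R0. }
  rewrite H0, Rminus_0_r, Rabs_right in Hb by (apply Rle_ge, cond_pos_sum; intros; apply Rabs_pos).
  eapply Rle_lt_trans; [apply G_lipschitz, Hi|].
  apply Rmult_lt_reg_r with (/ L); [now apply Rinv_0_lt_compat|].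
  rewrite (Rmult_comm L), Rmult_assoc, Rinv_r, Rmult_1_r by lra. exact Hb.
Qed.

Lemma lipschitz_field_uniform_le (v w : nat -> R) (B : R) i : (i <= n)%nat ->
  (forall j, (j <= n)%nat -> Rabs (v j - w j) <= B) -> Rabs (G v i - G w i) <= L * INR (S n) * B.
Proof.
  intros Hi Hvw. eapply Rle_trans; [now apply G_lipschitz|].
  rewrite Rmult_assoc, (Rmult_comm (INR (S n))), <- sum_cte.
  apply Rmult_le_compat_l; [lra | now apply sum_Rle].
Qed.

Lemma RInt_lipschitz_field_diff_le (X Y : R -> nat -> R) (b : R -> R) (t : R) i :
  0 <= t -> (i <= n)%nat ->
  (forall s j, (j <= n)%nat -> continuous (fun u => X u j) s) ->
  (forall s j, (j <= n)%nat -> continuous (fun u => Y u j) s) ->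
  (forall s, continuous b s) ->
  (forall s j, 0 < s < t -> (j <= n)%nat -> Rabs (X s j - Y s j) <= b s) ->
  Rabs (RInt (fun s => G (X s) i) 0 t - RInt (fun s => G (Y s) i) 0 t) <= L * INR (S n) * RInt b 0 t.
Proof.
  intros Ht Hi HX HY Hb Hle.
  set (gX := fun s => G (X s) i). set (gY := fun s => G (Y s) i).
  assert (HgX : forall s, continuous gX s) by (intros s; apply lipschitz_field_continuous; auto).
  assert (HgY : forall s, continuous gY s) by (intros s; apply lipschitz_field_continuous; auto).
  assert (Hdiff : forall s, continuous (fun u => gX u - gY u) s)
    by (intros s; apply (continuous_minus gX gY); [apply HgX | apply HgY]).
  replace (RInt gX 0 t - RInt gY 0 t) with (RInt (fun u => gX u - gY u) 0 t)
    by (rewrite (RInt_minus gX gY) by (apply ex_RInt_0_continuous; assumption);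
        unfold minus, plus, opp; simpl; ring).
  replace (L * INR (S n) * RInt b 0 t) with (RInt (fun s => L * INR (S n) * b s) 0 t)
    by exact (RInt_scal (V := R_CompleteNormedModule) b 0 t (L * INR (S n))
                        (ex_RInt_0_continuous b t Hb)).
  eapply Rle_trans; [apply abs_RInt_le; [exact Ht | apply ex_RInt_0_continuous, Hdiff]|].
  apply RInt_le; [exact Ht | | |].
  - apply ex_RInt_0_continuous. intros s. apply (continuous_Rabs_comp (fun u => gX u - gY u)), Hdiff.
  - apply ex_RInt_0_continuous. intros s. apply (continuous_scal_r (L * INR (S n)) b), Hb.
  - intros s Hs. apply lipschitz_field_uniform_le; [exact Hi|]. intros j Hj. now apply Hle.
Qed.

Fixpoint picard_iterate (k : nat) : R -> nat -> R :=
  match k with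
  | O => fun _ => x0
  | S k => fun t i => x0 i + RInt (fun s => G (picard_iterate k s) i) 0 t
  end.

Lemma picard_iterate_continuous k t i : (i <= n)%nat ->
  continuous (fun s => picard_iterate k s i) t.
Proof.
  revert t i. induction k as [|k IH]; intros t i Hi; simpl.
  - apply continuous_const.
  - apply (continuous_plus (fun _ => x0 i) (fun s => RInt (fun u => G (picard_iterate k u) i) 0 s)).
    + apply continuous_const.
    + exact (is_derive_continuous _ _ _
               (is_derive_RInt_0 _ t (fun s => lipschitz_field_continuous _ s (IH s) i Hi))).
Qed.

(* The iterates are compared in the weighted norm [sup |.| exp (- rate t)]: since [rate] is twice
   the Lipschitz constant [L (n + 1)] of the integral operator, each iteration halves the distance. *)
Let rate := 2 * INR (S n) * L.
Let scale := sum_f_R0 (fun j => Rabs (G x0 j)) n / rate.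

Lemma picard_rate_pos : 0 < rate.
Proof. unfold rate. pose proof (lt_0_INR (S n) ltac:(lia)). nra. Qed.

Lemma picard_scale_nonneg : 0 <= scale.
Proof.
  unfold scale. apply Rdiv_le_0_compat; [|exact picard_rate_pos].
  apply cond_pos_sum. intros; apply Rabs_pos.
Qed.

Lemma picard_iterate_step k t i : 0 <= t -> (i <= n)%nat ->
  Rabs (picard_iterate (S k) t i - picard_iterate k t i) <= scale * (/ 2) ^ k * exp (rate * t).
Proof.
  pose proof picard_rate_pos. pose proof picard_scale_nonneg.
  revert t i. induction k as [|k IH]; intros t i Ht Hi.
  - simpl. rewrite RInt_const. unfold scal; simpl; unfold mult; simpl.
    replace (x0 i + (t - 0) * G x0 i - x0 i) with (t * G x0 i) by ring.
    rewrite Rabs_mult, (Rabs_right t) by lra.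
    assert (Rabs (G x0 i) <= scale * rate).
    { unfold scale. replace (sum_f_R0 (fun j => Rabs (G x0 j)) n / rate * rate)
        with (sum_f_R0 (fun j => Rabs (G x0 j)) n) by (field; lra).
      apply (sum_f_R0_term_le (fun j => Rabs (G x0 j))); [intros; apply Rabs_pos | exact Hi]. }
    pose proof (exp_ineq1_le (rate * t)). pose proof (Rabs_pos (G x0 i)). nra.
  - change (Rabs (x0 i + RInt (fun s => G (picard_iterate (S k) s) i) 0 t
                  - (x0 i + RInt (fun s => G (picard_iterate k s) i) 0 t))
            <= scale * (/ 2) ^ S k * exp (rate * t)).
    replace (x0 i + RInt (fun s => G (picard_iterate (S k) s) i) 0 t
             - (x0 i + RInt (fun s => G (picard_iterate k s) i) 0 t))
      with (RInt (fun s => G (picard_iterate (S k) s) i) 0 t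
            - RInt (fun s => G (picard_iterate k s) i) 0 t)
      by ring.
    eapply Rle_trans;
      [apply (RInt_lipschitz_field_diff_le _ _ (fun s => scale * (/ 2) ^ k * exp (rate * s)));
        [exact Ht | exact Hi | intros; now apply picard_iterate_continuous
        | intros; now apply picard_iterate_continuous | | intros s j Hs Hj; apply IH; [lra | exact Hj]]|].
    { intros s. apply (is_derive_continuous _ _ (scale * (/ 2) ^ k * (rate * exp (rate * s)))).
      auto_derive; [exact I | ring]. }
    rewrite RInt_scal_exp by exact picard_rate_pos.
    replace (L * INR (S n) * (scale * (/ 2) ^ k / rate * (exp (rate * t) - 1)))
      with (scale * (/ 2) ^ S k * (exp (rate * t) - 1))
      by (unfold rate; simpl pow; pose proof (lt_0_INR (S n) ltac:(lia)); field; split; lra).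
    assert (0 <= scale * (/ 2) ^ S k) by (apply Rmult_le_pos; [lra | apply pow_le; lra]).
    pose proof (exp_pos (rate * t)). nra.
Qed.

Lemma picard_iterate_cauchy k m t i : (k <= m)%nat -> 0 <= t -> (i <= n)%nat ->
  Rabs (picard_iterate m t i - picard_iterate k t i) <= 2 * scale * (/ 2) ^ k * exp (rate * t).
Proof.
  intros Hkm Ht Hi. pose proof picard_scale_nonneg. pose proof (exp_pos (rate * t)).
  enough (Htel : forall j, Rabs (picard_iterate (k + j) t i - picard_iterate k t i)
                  <= 2 * scale * ((/ 2) ^ k - (/ 2) ^ (k + j)) * exp (rate * t)).
  { replace m with (k + (m - k))%nat by lia. eapply Rle_trans; [apply Htel|].
    assert (0 <= scale * (/ 2) ^ (k + (m - k)) * exp (rate * t))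
      by (apply Rmult_le_pos; [apply Rmult_le_pos; [lra | apply pow_le; lra] | lra]).
    lra. }
  induction j as [|j IH].
  - rewrite Nat.add_0_r, Rminus_eq_0, Rabs_R0. lra.
  - replace (k + S j)%nat with (S (k + j)) by lia.
    pose proof (picard_iterate_step (k + j) t i Ht Hi).
    replace (picard_iterate (S (k + j)) t i - picard_iterate k t i) with
      ((picard_iterate (S (k + j)) t i - picard_iterate (k + j) t i)
       + (picard_iterate (k + j) t i - picard_iterate k t i)) by ring.
    eapply Rle_trans; [apply Rabs_triang|]. simpl pow. nra.
Qed.

(* Freezing the iterates at [t = 0] for negative [t] makes the limit continuous on all of [R]. *)
Definition picard_limit (t : R) (i : nat) : R :=
  real (Lim_seq (fun k => picard_iterate k (Rmax 0 t) i)).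

Lemma picard_limit_is_lim t i : (i <= n)%nat ->
  is_lim_seq (fun k => picard_iterate k (Rmax 0 t) i) (picard_limit t i).
Proof.
  intros Hi. apply Lim_seq_correct', ex_lim_seq_cauchy_corr. intros [e He].
  pose proof picard_scale_nonneg. pose proof (exp_pos (rate * Rmax 0 t)).
  destruct (geometric_eventually_lt (2 * scale * exp (rate * Rmax 0 t)) e ltac:(nra) He) as [N HN].
  assert (Hsmall : forall k m, (N <= k)%nat -> (k <= m)%nat ->
    Rabs (picard_iterate m (Rmax 0 t) i - picard_iterate k (Rmax 0 t) i) < e).
  { intros k m Hk Hkm.
    eapply Rle_lt_trans; [apply picard_iterate_cauchy; [exact Hkm | apply Rmax_l | exact Hi]|].
    specialize (HN k Hk). lra. }
  exists N. intros k m Hk Hm. simpl. destruct (Nat.le_ge_cases k m).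
  - rewrite Rabs_minus_sym. now apply Hsmall.
  - now apply Hsmall.
Qed.

Lemma picard_limit_approx t k i : (i <= n)%nat ->
  Rabs (picard_limit t i - picard_iterate k (Rmax 0 t) i)
  <= 2 * scale * (/ 2) ^ k * exp (rate * Rmax 0 t).
Proof.
  intros Hi.
  assert (Hlim := is_lim_seq_abs _ _ (is_lim_seq_minus' _ (fun _ => picard_iterate k (Rmax 0 t) i) _ _
                    (picard_limit_is_lim t i Hi) (is_lim_seq_const _))).
  refine (is_lim_seq_le_loc _ (fun _ => 2 * scale * (/ 2) ^ k * exp (rate * Rmax 0 t)) _ _ _ Hlim
            (is_lim_seq_const _)).
  exists k. intros m Hm. apply picard_iterate_cauchy; [exact Hm | apply Rmax_l | exact Hi].
Qed.

Lemma picard_limit_approx_nonneg t k i : 0 <= t -> (i <= n)%nat ->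
  Rabs (picard_limit t i - picard_iterate k t i) <= 2 * scale * (/ 2) ^ k * exp (rate * t).
Proof.
  intros Ht Hi. pose proof (picard_limit_approx t k i Hi) as H. now rewrite Rmax_right in H.
Qed.

Lemma picard_limit_continuous t i : (i <= n)%nat -> continuous (fun s => picard_limit s i) t.
Proof.
  intros Hi. apply continuity_pt_filterlim.
  apply (CVU_continuity (fun k s => picard_iterate k (Rmax 0 s) i) _ t (mkposreal 1 Rlt_0_1));
    [| |apply Boule_center].
  - intros e He. pose proof picard_scale_nonneg. pose proof (exp_pos (rate * (Rabs t + 1))).
    destruct (geometric_eventually_lt (2 * scale * exp (rate * (Rabs t + 1))) e ltac:(nra) He) as [N HN].
    exists N. intros k s Hk Hs. eapply Rle_lt_trans; [apply picard_limit_approx, Hi|].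
    unfold Boule in Hs. simpl in Hs.
    assert (Hmax : Rmax 0 s <= Rabs t + 1).
    { apply Rmax_lub; [pose proof (Rabs_pos t); lra|].
      pose proof (Rle_abs t). pose proof (Rle_abs (s - t)). lra. }
    pose proof (exp_le_compat _ _ (Rmult_le_compat_l rate _ _ (Rlt_le _ _ picard_rate_pos) Hmax)).
    specialize (HN k Hk). pose proof (pow_le (/ 2) k ltac:(lra)).
    assert (0 <= 2 * scale * (/ 2) ^ k) by nra. nra.
  - intros k s _. apply continuity_pt_filterlim.
    apply (continuous_comp (Rmax 0) (fun u => picard_iterate k u i)).
    + apply continuous_Rmax_0.
    + apply picard_iterate_continuous, Hi.
Qed.

Lemma picard_limit_integral_defect t i k : 0 <= t -> (i <= n)%nat ->
  Rabs (picard_limit t i - (x0 i + RInt (fun s => G (picard_limit s) i) 0 t))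
  <= (/ 2) ^ k * (scale * exp (rate * t) + t * (L * INR (S n) * (2 * scale * exp (rate * t)))).
Proof.
  intros Ht Hi. set (E := exp (rate * t)).
  pose proof (exp_pos (rate * t)). pose proof picard_scale_nonneg. pose proof picard_rate_pos.
  assert (Happrox : Rabs (picard_limit t i - picard_iterate (S k) t i) <= scale * (/ 2) ^ k * E).
  { pose proof (picard_limit_approx_nonneg t (S k) i Ht Hi) as Hk. simpl pow in Hk. fold E in Hk. lra. }
  assert (Hint : Rabs (RInt (fun s => G (picard_iterate k s) i) 0 t
                       - RInt (fun s => G (picard_limit s) i) 0 t)
                 <= L * INR (S n) * (t * (2 * scale * (/ 2) ^ k * E))).
  { replace (t * (2 * scale * (/ 2) ^ k * E)) with (RInt (fun _ => 2 * scale * (/ 2) ^ k * E) 0 t)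
      by (rewrite RInt_const; unfold scal; simpl; unfold mult; simpl; ring).
    apply RInt_lipschitz_field_diff_le; [exact Ht | exact Hi | intros; now apply picard_iterate_continuous
      | intros; now apply picard_limit_continuous | intros; apply continuous_const |].
    intros s j Hs Hj. rewrite Rabs_minus_sym.
    eapply Rle_trans; [apply picard_limit_approx_nonneg; [lra | exact Hj]|].
    assert (exp (rate * s) <= E) by (apply exp_le_compat; nra).
    pose proof (pow_le (/ 2) k ltac:(lra)).
    assert (0 <= 2 * scale * (/ 2) ^ k) by nra. nra. }
  change (picard_iterate (S k) t i) with (x0 i + RInt (fun s => G (picard_iterate k s) i) 0 t) in Happrox.
  replace (picard_limit t i - (x0 i + RInt (fun s => G (picard_limit s) i) 0 t))
    with ((picard_limit t i - (x0 i + RInt (fun s => G (picard_iterate k s) i) 0 t))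
          + (RInt (fun s => G (picard_iterate k s) i) 0 t - RInt (fun s => G (picard_limit s) i) 0 t))
    by ring.
  eapply Rle_trans; [apply Rabs_triang|]. lra.
Qed.

Lemma picard_limit_integral t i : 0 <= t -> (i <= n)%nat ->
  picard_limit t i = x0 i + RInt (fun s => G (picard_limit s) i) 0 t.
Proof.
  intros Ht Hi.
  pose proof (le_0_of_le_geometric _ _ (fun k => picard_limit_integral_defect t i k Ht Hi)) as Hdef.
  pose proof (Rabs_pos (picard_limit t i - (x0 i + RInt (fun s => G (picard_limit s) i) 0 t))).
  assert (Hzero : Rabs (picard_limit t i - (x0 i + RInt (fun s => G (picard_limit s) i) 0 t)) = 0) by lra.
  apply Rabs_eq_0 in Hzero. lra.
Qed.

Theorem picard_global_existence :
  exists X : R -> nat -> R,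
    (forall i, (i <= n)%nat -> X 0 i = x0 i) /\
    (forall t i, (i <= n)%nat -> continuous (fun s => X s i) t) /\
    (forall t i, 0 < t -> (i <= n)%nat -> is_derive (fun s => X s i) t (G (X t) i)).
Proof.
  exists picard_limit. split; [|split].
  - intros i Hi. rewrite (picard_limit_integral 0 i (Rle_refl 0) Hi), RInt_point.
    unfold zero; simpl. ring.
  - exact picard_limit_continuous.
  - intros t i Ht Hi.
    apply (is_derive_ext_loc (fun s => x0 i + RInt (fun u => G (picard_limit u) i) 0 s)).
    + exists (mkposreal t Ht). intros s Hs. simpl in Hs. unfold ball in Hs; simpl in Hs.
      unfold AbsRing_ball, abs, minus, plus, opp in Hs; simpl in Hs. apply Rabs_def2 in Hs.
      symmetry. apply picard_limit_integral; [lra | exact Hi].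
    + replace (G (picard_limit t) i) with (0 + G (picard_limit t) i) by ring.
      apply (is_derive_plus (fun _ => x0 i));
        [exact (is_derive_const (K := R_AbsRing) (V := R_NormedModule) (x0 i) t)|].
      apply is_derive_RInt_0. intros s.
      apply lipschitz_field_continuous; [intros; apply picard_limit_continuous |]; assumption.
Qed.

End Picard.

Lemma Rabs_lin_comb6_le (k1 k2 k3 k4 k5 k6 u1 u2 u3 u4 u5 u6 D : R) :
  0 <= k1 -> 0 <= k2 -> 0 <= k3 -> 0 <= k4 -> 0 <= k5 -> 0 <= k6 ->
  Rabs u1 <= D -> Rabs u2 <= D -> Rabs u3 <= D -> Rabs u4 <= D -> Rabs u5 <= D -> Rabs u6 <= D ->
  Rabs (k1 * u1 + k2 * u2 + k3 * u3 + k4 * u4 + k5 * u5 + k6 * u6)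
    <= (k1 + k2 + k3 + k4 + k5 + k6) * D.
Proof.
  intros K1 K2 K3 K4 K5 K6 U1 U2 U3 U4 U5 U6.
  assert (Hterm : forall k u, 0 <= k -> Rabs u <= D -> - (k * D) <= k * u <= k * D)
    by (intros k u Hk Hu; apply Rabs_le_between in Hu; split; nra).
  pose proof (Hterm _ _ K1 U1). pose proof (Hterm _ _ K2 U2). pose proof (Hterm _ _ K3 U3).
  pose proof (Hterm _ _ K4 U4). pose proof (Hterm _ _ K5 U5). pose proof (Hterm _ _ K6 U6).
  apply Rabs_le. lra.
Qed.

Lemma lin_comb6_le_of_coeff_le (m1 m2 m3 m4 m5 m6 k1 k2 k3 k4 k5 k6 c : R) :
  0 <= m1 -> 0 <= m2 -> 0 <= m3 -> 0 <= m4 -> 0 <= m5 -> 0 <= m6 ->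
  k1 <= c -> k2 <= c -> k3 <= c -> k4 <= c -> k5 <= c -> k6 <= c ->
  m1 * k1 + m2 * k2 + m3 * k3 + m4 * k4 + m5 * k5 + m6 * k6 <= c * (m1 + m2 + m3 + m4 + m5 + m6).
Proof.
  intros. assert (forall m k, 0 <= m -> k <= c -> m * k <= m * c) by (intros; apply Rmult_le_compat_l; lra).
  assert (m1 * k1 <= m1 * c) by auto. assert (m2 * k2 <= m2 * c) by auto.
  assert (m3 * k3 <= m3 * c) by auto. assert (m4 * k4 <= m4 * c) by auto.
  assert (m5 * k5 <= m5 * c) by auto. assert (m6 * k6 <= m6 * c) by auto.
  lra.
Qed.

Lemma dist_st_lt_iff (X Y : state) (r : R) :
  dist_st X Y < r <->
  Rabs (sS X - sS Y) < r /\ Rabs (sE X - sE Y) < r /\ Rabs (sI X - sI Y) < r /\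
  Rabs (sR X - sR Y) < r /\ Rabs (sU X - sU Y) < r /\ Rabs (sC X - sC Y) < r.
Proof. unfold dist_st. rewrite !Rmax_Rlt. tauto. Qed.

Lemma dist_st_ge (X Y : state) :
  Rabs (sS X - sS Y) <= dist_st X Y /\ Rabs (sE X - sE Y) <= dist_st X Y /\
  Rabs (sI X - sI Y) <= dist_st X Y /\ Rabs (sR X - sR Y) <= dist_st X Y /\
  Rabs (sU X - sU Y) <= dist_st X Y /\ Rabs (sC X - sC Y) <= dist_st X Y.
Proof.
  unfold dist_st. repeat split;
    repeat first [ apply Rmax_l | apply Rle_refl | eapply Rle_trans; [|apply Rmax_r] ].
Qed.

Lemma dist_st_triang (X Y Z : state) : dist_st X Z <= dist_st X Y + dist_st Y Z.
Proof.
  pose proof (dist_st_ge X Y) as [A1 [A2 [A3 [A4 [A5 A6]]]]].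
  pose proof (dist_st_ge Y Z) as [B1 [B2 [B3 [B4 [B5 B6]]]]].
  assert (T : forall x y z, Rabs (x - z) <= Rabs (x - y) + Rabs (y - z)).
  { intros x y z. replace (x - z) with ((x - y) + (y - z)) by ring. apply Rabs_triang. }
  unfold dist_st at 1. repeat apply Rmax_lub.
  - pose proof (T (sS X) (sS Y) (sS Z)). lra.
  - pose proof (T (sE X) (sE Y) (sE Z)). lra.
  - pose proof (T (sI X) (sI Y) (sI Z)). lra.
  - pose proof (T (sR X) (sR Y) (sR Z)). lra.
  - pose proof (T (sU X) (sU Y) (sU Z)). lra.
  - pose proof (T (sC X) (sC Y) (sC Z)). lra.
Qed.

Lemma S_over_N_le (X : state) (s k : R) : 0 < s -> 1 < k ->
  dist_st X (mkState s 0 0 0 0 0) < (k - 1) * s / (1 + 6 * k) ->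
  0 < sS X /\ 0 < totalN X /\ sS X / totalN X <= k.
Proof.
  intros Hs Hk Hd. apply dist_st_lt_iff in Hd. simpl in Hd. rewrite !Rminus_0_r in Hd.
  destruct Hd as [H1 [H2 [H3 [H4 [H5 H6]]]]].
  set (r := (k - 1) * s / (1 + 6 * k)) in *.
  assert (Hr : r * (1 + 6 * k) = (k - 1) * s) by (unfold r; field; lra).
  apply Rabs_def2 in H1, H2, H3, H4, H5, H6.
  assert (6 * r < s) by nra.
  unfold totalN. split; [lra | split; [lra|]].
  apply Rmult_le_reg_r with (sS X + sE X + sI X + sR X + sU X + sC X); [lra|].
  unfold Rdiv. rewrite Rmult_assoc, Rinv_l by lra. nra.
Qed.

Lemma S_over_N_ge (X : state) (s k : R) : 0 < s -> 0 < k < 1 ->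
  0 <= sE X -> 0 <= sI X -> 0 <= sR X -> 0 <= sU X -> 0 <= sC X ->
  dist_st X (mkState s 0 0 0 0 0) < (1 - k) * s / (1 + 6 * k) ->
  k <= sS X / totalN X.
Proof.
  intros Hs Hk P1 P2 P3 P4 P5 Hd. apply dist_st_lt_iff in Hd. simpl in Hd. rewrite !Rminus_0_r in Hd.
  destruct Hd as [H1 [H2 [H3 [H4 [H5 H6]]]]].
  set (r := (1 - k) * s / (1 + 6 * k)) in *.
  assert (Hr : r * (1 + 6 * k) = (1 - k) * s) by (unfold r; field; lra).
  apply Rabs_def2 in H1, H2, H3, H4, H5, H6.
  assert (r < s) by nra.
  unfold totalN. apply Rmult_le_reg_r with (sS X + sE X + sI X + sR X + sU X + sC X); [lra|].
  unfold Rdiv. rewrite Rmult_assoc, Rinv_l by lra. nra.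
Qed.

Lemma state_continuous_dist (x : R -> state) (t : R) :
  continuous (fun s => sS (x s)) t -> continuous (fun s => sE (x s)) t ->
  continuous (fun s => sI (x s)) t -> continuous (fun s => sR (x s)) t ->
  continuous (fun s => sU (x s)) t -> continuous (fun s => sC (x s)) t ->
  forall e, 0 < e -> exists d, 0 < d /\ forall s, Rabs (s - t) < d -> dist_st (x s) (x t) < e.
Proof.
  intros CS CE CI CR CU CC e He.
  destruct (proj1 (continuous_R_iff _ t) CS e He) as [d1 [H1 K1]].
  destruct (proj1 (continuous_R_iff _ t) CE e He) as [d2 [H2 K2]].
  destruct (proj1 (continuous_R_iff _ t) CI e He) as [d3 [H3 K3]].
  destruct (proj1 (continuous_R_iff _ t) CR e He) as [d4 [H4 K4]].
  destruct (proj1 (continuous_R_iff _ t) CU e He) as [d5 [H5 K5]].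
  destruct (proj1 (continuous_R_iff _ t) CC e He) as [d6 [H6 K6]].
  exists (Rmin d1 (Rmin d2 (Rmin d3 (Rmin d4 (Rmin d5 d6))))).
  split; [repeat apply Rmin_pos; assumption|]. intros s Hs.
  apply Rmin_Rgt in Hs as [Hs1 Hs]. apply Rmin_Rgt in Hs as [Hs2 Hs].
  apply Rmin_Rgt in Hs as [Hs3 Hs]. apply Rmin_Rgt in Hs as [Hs4 Hs].
  apply Rmin_Rgt in Hs as [Hs5 Hs6].
  apply dist_st_lt_iff. repeat split; [apply K1 | apply K2 | apply K3 | apply K4 | apply K5 | apply K6];
    assumption.
Qed.

Lemma Rabs_mult_div_sub_le (s j m s' j' m' smax jmax mmin mmax D : R) :
  0 < mmin -> 0 <= s <= smax -> 0 <= s' <= smax -> 0 <= j <= jmax -> 0 <= j' <= jmax ->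
  mmin <= m <= mmax -> mmin <= m' <= mmax ->
  Rabs (s - s') <= D -> Rabs (j - j') <= D -> Rabs (m - m') <= D ->
  Rabs (s * j / m - s' * j' / m') <= (jmax * mmax + smax * mmax + smax * jmax) / (mmin * mmin) * D.
Proof.
  intros Hmin Hs Hs' Hj Hj' Hm Hm' Ds Dj Dm.
  assert (HD : 0 <= D) by (eapply Rle_trans; [apply Rabs_pos | exact Ds]).
  set (num := (s - s') * j * m' + s' * (j - j') * m' + s' * j' * (m' - m)).
  replace (s * j / m - s' * j' / m') with (num / (m * m')) by (unfold num; field; lra).
  assert (Hnum : Rabs num <= (jmax * mmax + smax * mmax + smax * jmax) * D).
  { unfold num. eapply Rle_trans; [apply Rabs_triang|].
    eapply Rle_trans; [apply Rplus_le_compat_r, Rabs_triang|].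
    rewrite !Rabs_mult, (Rabs_right j), (Rabs_right m'), (Rabs_right s'), (Rabs_right j') by lra.
    rewrite Rabs_minus_sym in Dm.
    pose proof (Rabs_pos (s - s')). pose proof (Rabs_pos (j - j')). pose proof (Rabs_pos (m' - m)).
    assert (Rabs (s - s') * j <= D * jmax) by (apply Rmult_le_compat; lra).
    assert (Rabs (s - s') * j * m' <= D * jmax * mmax) by (apply Rmult_le_compat; nra).
    assert (s' * Rabs (j - j') <= smax * D) by (apply Rmult_le_compat; lra).
    assert (s' * Rabs (j - j') * m' <= smax * D * mmax) by (apply Rmult_le_compat; nra).
    assert (s' * j' <= smax * jmax) by (apply Rmult_le_compat; lra).
    assert (s' * j' * Rabs (m' - m) <= smax * jmax * D) by (apply Rmult_le_compat; nra).
    lra. }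
  assert (Hmm : mmin * mmin <= m * m') by (apply Rmult_le_compat; lra).
  unfold Rdiv.
  rewrite Rabs_mult, (Rabs_right (/ (m * m'))) by (apply Rle_ge; left; apply Rinv_0_lt_compat; nra).
  replace ((jmax * mmax + smax * mmax + smax * jmax) * / (mmin * mmin) * D)
    with ((jmax * mmax + smax * mmax + smax * jmax) * D * / (mmin * mmin)) by ring.
  apply Rmult_le_compat; [apply Rabs_pos | left; apply Rinv_0_lt_compat; nra | exact Hnum |].
  apply Rinv_le_contravar; nra.
Qed.

Definition clamp (lo hi x : R) : R := Rmax lo (Rmin hi x).

Lemma clamp_in_range lo hi x : lo <= hi -> lo <= clamp lo hi x <= hi.
Proof. intros H. unfold clamp, Rmax, Rmin. destruct (Rle_dec hi x), (Rle_dec lo _); lra. Qed.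

Lemma clamp_id lo hi x : lo <= x <= hi -> clamp lo hi x = x.
Proof. intros H. unfold clamp, Rmax, Rmin. destruct (Rle_dec hi x), (Rle_dec lo _); lra. Qed.

Lemma clamp_below lo hi x : lo <= hi -> x < lo -> clamp lo hi x = lo.
Proof. intros H Hx. unfold clamp, Rmax, Rmin. destruct (Rle_dec hi x), (Rle_dec lo _); lra. Qed.

Lemma clamp_above lo hi x : lo <= hi -> hi < x -> clamp lo hi x = hi.
Proof. intros H Hx. unfold clamp, Rmax, Rmin. destruct (Rle_dec hi x), (Rle_dec lo _); lra. Qed.

Lemma clamp_lipschitz lo hi x y : lo <= hi -> Rabs (clamp lo hi x - clamp lo hi y) <= Rabs (x - y).
Proof.
  intros H. pose proof (Rle_abs (x - y)). pose proof (Rle_abs (y - x)). rewrite (Rabs_minus_sym y x) in *.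
  apply Rabs_le. unfold clamp, Rmax, Rmin.
  destruct (Rle_dec hi x), (Rle_dec hi y); repeat destruct (Rle_dec lo _); lra.
Qed.

(** * The model near the disease-free equilibrium *)

Section SEIRUC.

Variable p : params.
Hypothesis Hp : admissible p.

Lemma theta_pos : 0 < theta1 p /\ 0 < theta2 p /\ 0 < theta3 p /\ 0 < theta4 p.
Proof. pose proof Hp as P. unfold admissible, theta1, theta2, theta3, theta4 in *. lra. Qed.

Lemma Ndfe_pos : 0 < Ndfe p.
Proof. pose proof Hp as P. red in P. unfold Ndfe. apply Rdiv_lt_0_compat; lra. Qed.

Lemma E0_eq : E0 p = mkState (Ndfe p) 0 0 0 0 0.
Proof. reflexivity. Qed.

(* With [E] weighted by [1], these weights make the derivative of
   [E + wI I + wR R + wU U] along the linearisation at [E0] equal to [theta1 (R0 - 1) E]. *)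
Definition wR := beta p / theta3 p.
Definition wU := (beta p + eta p * wR) / theta4 p.
Definition wI := (beta p + gamma p * q p * wR + gamma p * (1 - q p) * wU) / theta2 p.

Lemma weights_pos : 0 < wR /\ 0 < wU /\ 0 < wI.
Proof.
  pose proof Hp as P. red in P. pose proof theta_pos as [T1 [T2 [T3 T4]]].
  assert (HR : 0 < wR) by (unfold wR; apply Rdiv_lt_0_compat; lra).
  assert (HU : 0 < wU) by (unfold wU; apply Rdiv_lt_0_compat; nra).
  split; [exact HR | split; [exact HU|]].
  unfold wI. apply Rdiv_lt_0_compat; [|lra].
  assert (0 <= gamma p * q p * wR) by (apply Rmult_le_pos; [apply Rmult_le_pos|]; lra).
  assert (0 <= gamma p * (1 - q p) * wU) by (apply Rmult_le_pos; [apply Rmult_le_pos|]; lra).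
  lra.
Qed.

Lemma weights_balance :
  theta3 p * wR = beta p /\ theta4 p * wU = beta p + eta p * wR /\
  theta2 p * wI = beta p + gamma p * q p * wR + gamma p * (1 - q p) * wU /\
  a p * wI = theta1 p * basic_R0 p.
Proof.
  pose proof Hp as P. red in P. pose proof theta_pos as [T1 [T2 [T3 T4]]].
  unfold basic_R0, Ndfe, PP, wI, wU, wR. repeat split; field; repeat split; lra.
Qed.

Lemma basic_R0_pos : 0 < basic_R0 p.
Proof.
  pose proof Hp as P. red in P. pose proof theta_pos as [T1 _].
  pose proof weights_pos as [_ [_ HI]]. pose proof weights_balance as [_ [_ [_ Hbal]]].
  assert (0 < a p * wI) by (apply Rmult_lt_0_compat; lra). nra.
Qed.

(* [wE] and [ratio_bound] (a bound for [S / N] near [E0]) are chosen so that in the derivative of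
   [wE E + wI I + wR R + wU U] the coefficient [theta1 (R0 - wE)] of [E] and the coefficient
   [beta (wE ratio_bound - 1)] of [I], [R], [U] are [theta1 (R0 - 1) / 2] and [beta (R0 - 1) / 4]. *)
Definition wE := (1 + basic_R0 p) / 2.
Definition ratio_bound := (3 + basic_R0 p) / (2 * (1 + basic_R0 p)).

Lemma wE_ratio_bound : wE * ratio_bound = (3 + basic_R0 p) / 4.
Proof. pose proof basic_R0_pos. unfold wE, ratio_bound. field. lra. Qed.

Lemma wE_pos : 0 < wE.
Proof. pose proof basic_R0_pos. unfold wE. lra. Qed.

Lemma ratio_bound_pos : 0 < ratio_bound.
Proof. pose proof basic_R0_pos. unfold ratio_bound. apply Rdiv_lt_0_compat; lra. Qed.

Lemma ratio_bound_sub_1 : ratio_bound - 1 = (1 - basic_R0 p) / (2 * (1 + basic_R0 p)).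
Proof. pose proof basic_R0_pos. unfold ratio_bound. field. lra. Qed.

Definition infected_load (X : state) := sI X + sU X + sR X.

Lemma force_eq (X : state) : force p X = beta p * (sS X / totalN X) * infected_load X.
Proof. unfold force, infected_load, Rdiv. ring. Qed.

Lemma weighted_infected_derivative (X : state) :
  wE * fE p X + wI * fI p X + wR * fR p X + wU * fU p X =
  wE * force p X - beta p * infected_load X + theta1 p * (basic_R0 p - wE) * sE X.
Proof.
  pose proof weights_balance as [B1 [B2 [B3 B4]]].
  unfold fE, fI, fR, fU, infected_load. fold (theta1 p) (theta2 p) (theta3 p).
  replace (wU * (gamma p * (1 - q p) * sI X - (delta4 p + c4 p) * sU X - eta p * sU X))
    with (wU * (gamma p * (1 - q p) * sI X) - theta4 p * wU * sU X) by (unfold theta4; ring).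
  rewrite B2.
  transitivity (wE * force p X - theta1 p * wE * sE X + a p * wI * sE X - theta2 p * wI * sI X
    + wR * gamma p * q p * sI X - theta3 p * wR * sR X + wU * gamma p * (1 - q p) * sI X - beta p * sU X);
    [ring|].
  rewrite B1, B3, B4. ring.
Qed.

Lemma solution_continuous_dist (x : R -> state) (t : R) : is_solution p x -> 0 < t ->
  forall e, 0 < e -> exists d, 0 < d /\ forall s, Rabs (s - t) < d -> dist_st (x s) (x t) < e.
Proof.
  intros [Hder _] Ht. destruct (Hder t Ht) as [DS [DE [DI [DR [DU DC]]]]].
  apply state_continuous_dist; eapply is_derive_continuous; eassumption.
Qed.

Lemma solution_right_continuous_dist (x : R -> state) (a : R) : is_solution p x -> 0 <= a ->
  forall e, 0 < e -> exists d, 0 < d /\ forall s, a <= s < a + d -> dist_st (x s) (x a) < e.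
Proof.
  intros Hx Ha e He. destruct (Req_dec a 0) as [-> | Ha0].
  - destruct (proj2 Hx e He) as [d [Hd Hb]]. exists d. split; [exact Hd|].
    intros s Hs. apply Hb. lra.
  - destruct (solution_continuous_dist x a Hx ltac:(lra) e He) as [d [Hd Hb]].
    exists d. split; [exact Hd|]. intros s Hs. apply Hb. rewrite Rabs_right; lra.
Qed.

Lemma lipschitz_along_solution (F : state -> R) (K : R) (x : R -> state) :
  is_solution p x -> 0 < K -> (forall X Y, Rabs (F X - F Y) <= K * dist_st X Y) ->
  (forall a, 0 <= a -> right_continuous (fun s => F (x s)) a) /\
  (forall t, 0 < t -> continuous (fun s => F (x s)) t).
Proof.
  intros Hx HK HF.
  assert (Hsmall : forall X Y e, dist_st X Y < e / K -> Rabs (F X - F Y) < e).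
  { intros X Y e Hd. eapply Rle_lt_trans; [apply HF|].
    apply Rmult_lt_reg_r with (/ K); [now apply Rinv_0_lt_compat|].
    rewrite (Rmult_comm K), Rmult_assoc, Rinv_r by lra. unfold Rdiv in Hd. lra. }
  split.
  - intros a Ha e He.
    destruct (solution_right_continuous_dist x a Hx Ha (e / K) ltac:(apply Rdiv_lt_0_compat; lra))
      as [d [Hd Hb]].
    exists d. split; [exact Hd|]. intros s Hs. apply Hsmall, Hb, Hs.
  - intros t Ht. apply continuous_R_iff. intros e He.
    destruct (solution_continuous_dist x t Hx Ht (e / K) ltac:(apply Rdiv_lt_0_compat; lra))
      as [d [Hd Hb]].
    exists d. split; [exact Hd|]. intros s Hs. apply Hsmall, Hb, Hs.
Qed.

(** * Stability when [R0 < 1] *)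

Section Stability.

Hypothesis HR0 : basic_R0 p < 1.

(* Weights of [|S - Ndfe|] and [|C|], small enough for the flows these compartments exchange with the
   infected ones to be absorbed by the margins left by [wE], [wI], [wR], [wU]. *)
Definition wS := (1 - basic_R0 p) / (16 * ratio_bound).
Definition wC := (1 - basic_R0 p) * beta p * theta1 p /
                 (16 * (c1 p + c2 p + c3 p + c4 p) * (beta p + theta1 p)).

Definition lyapunov (X : state) :=
  wE * Rabs (sE X) + wI * Rabs (sI X) + wR * Rabs (sR X) + wU * Rabs (sU X) +
  wS * Rabs (sS X - Ndfe p) + wC * Rabs (sC X).

Definition l1_dev (X : state) :=
  Rabs (sS X - Ndfe p) + Rabs (sE X) + Rabs (sI X) + Rabs (sR X) + Rabs (sU X) + Rabs (sC X).

Definition decay_rate :=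
  Rmin (Rmin (theta1 p * (1 - basic_R0 p) / 4) (beta p * (1 - basic_R0 p) / 8))
       (Rmin (wS * delta p) (wC * delta5 p)).

Definition rho_stable := (ratio_bound - 1) * Ndfe p / (1 + 6 * ratio_bound).

Lemma ratio_bound_gt_1 : 1 < ratio_bound.
Proof.
  pose proof basic_R0_pos. pose proof ratio_bound_sub_1.
  assert (0 < (1 - basic_R0 p) / (2 * (1 + basic_R0 p))) by (apply Rdiv_lt_0_compat; lra). lra.
Qed.

Lemma wS_pos : 0 < wS.
Proof. pose proof ratio_bound_gt_1. unfold wS. apply Rdiv_lt_0_compat; lra. Qed.

Lemma wS_spec : wS * ratio_bound * beta p = beta p * (1 - basic_R0 p) / 16.
Proof. pose proof ratio_bound_gt_1. unfold wS. field. lra. Qed.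

Lemma wC_pos : 0 < wC.
Proof.
  pose proof Hp as P. red in P. pose proof theta_pos as [T1 _].
  unfold wC. apply Rdiv_lt_0_compat; repeat apply Rmult_lt_0_compat; lra.
Qed.

(* [wC] is built from [beta theta1 / (beta + theta1)], which is below both [beta] and [theta1]. *)
Lemma wC_spec : wC * c1 p <= (1 - basic_R0 p) * theta1 p / 16 /\
  wC * c2 p <= (1 - basic_R0 p) * beta p / 16 /\ wC * c3 p <= (1 - basic_R0 p) * beta p / 16 /\
  wC * c4 p <= (1 - basic_R0 p) * beta p / 16.
Proof.
  pose proof Hp as P. red in P. pose proof theta_pos as [T1 _].
  set (h := beta p * theta1 p / (beta p + theta1 p)).
  assert (Hh : h <= beta p /\ h <= theta1 p).
  { unfold h. split; apply Rmult_le_reg_r with (beta p + theta1 p); try lra;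
      unfold Rdiv; rewrite Rmult_assoc, Rinv_l by lra; nra. }
  assert (Hc : forall ci, 0 < ci -> ci <= c1 p + c2 p + c3 p + c4 p ->
             wC * ci <= (1 - basic_R0 p) * h / 16).
  { intros ci Hci Hle.
    replace (wC * ci) with ((1 - basic_R0 p) * h / 16 * (ci / (c1 p + c2 p + c3 p + c4 p)))
      by (unfold wC, h; field; lra).
    assert (ci / (c1 p + c2 p + c3 p + c4 p) <= 1)
      by (apply Rmult_le_reg_r with (c1 p + c2 p + c3 p + c4 p); [lra|];
          unfold Rdiv; rewrite Rmult_assoc, Rinv_l by lra; lra).
    assert (0 <= (1 - basic_R0 p) * h / 16)
      by (unfold h; apply Rmult_le_pos; [apply Rmult_le_pos; [lra | apply Rdiv_le_0_compat; nra] | lra]).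
    nra. }
  assert (Hmono : forall u, h <= u -> (1 - basic_R0 p) * h / 16 <= (1 - basic_R0 p) * u / 16)
    by (intros u Hu; unfold Rdiv; apply Rmult_le_compat_r; [lra | apply Rmult_le_compat_l; lra]).
  repeat split; (eapply Rle_trans; [apply Hc; lra | apply Hmono; lra]).
Qed.

Lemma decay_rate_pos : 0 < decay_rate.
Proof.
  pose proof Hp as P. red in P. pose proof theta_pos as [T1 _]. pose proof wS_pos. pose proof wC_pos.
  unfold decay_rate. repeat apply Rmin_pos; nra.
Qed.

Lemma rho_stable_pos : 0 < rho_stable.
Proof.
  pose proof ratio_bound_gt_1. pose proof Ndfe_pos.
  unfold rho_stable. apply Rdiv_lt_0_compat; nra.
Qed.

Lemma force_bound_stable (X : state) : dist_st X (E0 p) < rho_stable ->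
  Rabs (force p X) <= beta p * ratio_bound * (Rabs (sI X) + Rabs (sU X) + Rabs (sR X)).
Proof.
  intros Hd. pose proof Hp as P. red in P.
  destruct (S_over_N_le X (Ndfe p) ratio_bound Ndfe_pos ratio_bound_gt_1 Hd) as [HS [HN Hratio]].
  rewrite force_eq. unfold infected_load.
  assert (0 <= sS X / totalN X) by (left; apply Rdiv_lt_0_compat; lra).
  rewrite Rabs_mult, (Rabs_right (beta p * (sS X / totalN X))) by (apply Rle_ge, Rmult_le_pos; lra).
  pose proof (Rabs_triang (sI X + sU X) (sR X)). pose proof (Rabs_triang (sI X) (sU X)).
  pose proof ratio_bound_gt_1.
  apply Rmult_le_compat; [apply Rmult_le_pos; lra | apply Rabs_pos | apply Rmult_le_compat_l; lra | lra].
Qed.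

(* The six coefficients of [|S - Ndfe|], [|E|], [|I|], [|R|], [|U|], [|C|] are at most [- decay_rate]. *)
Lemma lyapunov_rate_le (X : state) :
  wE * (- theta1 p * Rabs (sE X) + beta p * ratio_bound * (Rabs (sI X) + Rabs (sU X) + Rabs (sR X))) +
  wI * (- theta2 p * Rabs (sI X) + a p * Rabs (sE X)) +
  wR * (- theta3 p * Rabs (sR X) + (gamma p * q p * Rabs (sI X) + eta p * Rabs (sU X))) +
  wU * (- theta4 p * Rabs (sU X) + gamma p * (1 - q p) * Rabs (sI X)) +
  wS * (- delta p * Rabs (sS X - Ndfe p)
        + beta p * ratio_bound * (Rabs (sI X) + Rabs (sU X) + Rabs (sR X))) +
  wC * (- delta5 p * Rabs (sC X) +
        (c1 p * Rabs (sE X) + c2 p * Rabs (sI X) + c3 p * Rabs (sR X) + c4 p * Rabs (sU X)))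
  <= - decay_rate * l1_dev X.
Proof.
  pose proof Hp as P. red in P. pose proof theta_pos as [T1 [T2 [T3 T4]]].
  pose proof weights_balance as [B1 [B2 [B3 B4]]].
  pose proof wS_spec. pose proof wC_spec as [C1 [C2 [C3 C4]]].
  assert (HwE : wE * ratio_bound * beta p = (3 + basic_R0 p) / 4 * beta p)
    by (rewrite wE_ratio_bound; ring).
  assert (D1 : decay_rate <= theta1 p * (1 - basic_R0 p) / 4)
    by (unfold decay_rate; eapply Rle_trans; [apply Rmin_l | apply Rmin_l]).
  assert (D2 : decay_rate <= beta p * (1 - basic_R0 p) / 8)
    by (unfold decay_rate; eapply Rle_trans; [apply Rmin_l | apply Rmin_r]).
  assert (D3 : decay_rate <= wS * delta p)
    by (unfold decay_rate; eapply Rle_trans; [apply Rmin_r | apply Rmin_l]).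
  assert (D4 : decay_rate <= wC * delta5 p)
    by (unfold decay_rate; eapply Rle_trans; [apply Rmin_r | apply Rmin_r]).
  assert (0 < theta1 p * (1 - basic_R0 p)) by (apply Rmult_lt_0_compat; lra).
  assert (0 < beta p * (1 - basic_R0 p)) by (apply Rmult_lt_0_compat; lra).
  unfold l1_dev.
  set (mS := Rabs (sS X - Ndfe p)). set (mE := Rabs (sE X)). set (mI := Rabs (sI X)).
  set (mR := Rabs (sR X)). set (mU := Rabs (sU X)). set (mC := Rabs (sC X)).
  match goal with |- ?G <= _ => replace G with
    (mS * (- (wS * delta p)) + mE * (a p * wI - theta1 p * wE + wC * c1 p)
     + mI * (wE * ratio_bound * beta p - theta2 p * wI + gamma p * q p * wR
             + gamma p * (1 - q p) * wU + wS * ratio_bound * beta p + wC * c2 p)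
     + mR * (wE * ratio_bound * beta p - theta3 p * wR + wS * ratio_bound * beta p + wC * c3 p)
     + mU * (wE * ratio_bound * beta p + eta p * wR - theta4 p * wU + wS * ratio_bound * beta p
             + wC * c4 p)
     + mC * (- (wC * delta5 p))) by ring end.
  apply lin_comb6_le_of_coeff_le; try (unfold mS, mE, mI, mR, mU, mC; apply Rabs_pos).
  - lra.
  - rewrite B4. unfold wE. lra.
  - rewrite HwE, B3. lra.
  - rewrite HwE, B1. lra.
  - rewrite HwE, B2. lra.
  - lra.
Qed.

Lemma component_rate_bounds (X : state) : dist_st X (E0 p) < rho_stable ->
  Rabs (fE p X + theta1 p * sE X) <= beta p * ratio_bound * (Rabs (sI X) + Rabs (sU X) + Rabs (sR X)) /\
  Rabs (fI p X + theta2 p * sI X) <= a p * Rabs (sE X) /\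
  Rabs (fR p X + theta3 p * sR X) <= gamma p * q p * Rabs (sI X) + eta p * Rabs (sU X) /\
  Rabs (fU p X + theta4 p * sU X) <= gamma p * (1 - q p) * Rabs (sI X) /\
  Rabs (fS p X + delta p * (sS X - Ndfe p))
    <= beta p * ratio_bound * (Rabs (sI X) + Rabs (sU X) + Rabs (sR X)) /\
  Rabs (fC p X + delta5 p * sC X)
    <= c1 p * Rabs (sE X) + c2 p * Rabs (sI X) + c3 p * Rabs (sR X) + c4 p * Rabs (sU X).
Proof.
  intros Hnear. pose proof Hp as P. red in P. pose proof (force_bound_stable X Hnear) as HF.
  assert (Hpos : forall u v, 0 <= u -> Rabs (u * v) = u * Rabs v)
    by (intros u v Hu; rewrite Rabs_mult, Rabs_right; lra).
  assert (Hq : 0 <= gamma p * q p /\ 0 <= gamma p * (1 - q p)) by (split; apply Rmult_le_pos; lra).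
  repeat split.
  - replace (fE p X + theta1 p * sE X) with (force p X) by (unfold fE, theta1; ring). exact HF.
  - replace (fI p X + theta2 p * sI X) with (a p * sE X) by (unfold fI, theta2; ring).
    rewrite Hpos; lra.
  - replace (fR p X + theta3 p * sR X) with (gamma p * q p * sI X + eta p * sU X)
      by (unfold fR, theta3; ring).
    eapply Rle_trans; [apply Rabs_triang|]. rewrite !Hpos; lra.
  - replace (fU p X + theta4 p * sU X) with (gamma p * (1 - q p) * sI X) by (unfold fU, theta4; ring).
    rewrite Hpos; lra.
  - replace (fS p X + delta p * (sS X - Ndfe p)) with (- force p X) by (unfold fS, Ndfe; field; lra).
    rewrite Rabs_Ropp. exact HF.
  - replace (fC p X + delta5 p * sC X) with (c1 p * sE X + c2 p * sI X + c3 p * sR X + c4 p * sU X)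
      by (unfold fC; ring).
    eapply Rle_trans; [apply Rabs_triang|].
    eapply Rle_trans; [apply Rplus_le_compat_r, Rabs_triang|].
    eapply Rle_trans; [apply Rplus_le_compat_r, Rplus_le_compat_r, Rabs_triang|].
    rewrite !Hpos; lra.
Qed.

Lemma lyapunov_right_dini (x : R -> state) (t : R) : is_solution p x -> 0 < t ->
  dist_st (x t) (E0 p) < rho_stable ->
  right_dini_le (fun s => lyapunov (x s)) t (- decay_rate * l1_dev (x t)).
Proof.
  intros [Hder _] Ht Hnear. destruct (Hder t Ht) as [DS [DE [DI [DR [DU DC]]]]].
  destruct (component_rate_bounds (x t) Hnear) as [BE [BI [BR [BU [BS BC]]]]].
  pose proof Hp as P. red in P. pose proof theta_pos as [T1 [T2 [T3 T4]]].
  pose proof weights_pos as [PR [PU PI]]. pose proof wE_pos. pose proof wS_pos. pose proof wC_pos.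
  assert (HgE := is_derive_Rabs_right_dini_le _ t _ (theta1 p) _ DE ltac:(lra) BE).
  assert (HgI := is_derive_Rabs_right_dini_le _ t _ (theta2 p) _ DI ltac:(lra) BI).
  assert (HgR := is_derive_Rabs_right_dini_le _ t _ (theta3 p) _ DR ltac:(lra) BR).
  assert (HgU := is_derive_Rabs_right_dini_le _ t _ (theta4 p) _ DU ltac:(lra) BU).
  assert (HgS := is_derive_Rabs_right_dini_le _ t _ (delta p) _ (is_derive_sub_const _ t _ (Ndfe p) DS)
                   ltac:(lra) BS).
  assert (HgC := is_derive_Rabs_right_dini_le _ t _ (delta5 p) _ DC ltac:(lra) BC).
  assert (Hsum := right_dini_le_plus _ _ _ _ _
    (right_dini_le_plus _ _ _ _ _
      (right_dini_le_plus _ _ _ _ _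
        (right_dini_le_plus _ _ _ _ _
          (right_dini_le_plus _ _ _ _ _
            (right_dini_le_scal _ _ _ wE ltac:(lra) HgE) (right_dini_le_scal _ _ _ wI ltac:(lra) HgI))
          (right_dini_le_scal _ _ _ wR ltac:(lra) HgR))
        (right_dini_le_scal _ _ _ wU ltac:(lra) HgU))
      (right_dini_le_scal _ _ _ wS ltac:(lra) HgS))
    (right_dini_le_scal _ _ _ wC ltac:(lra) HgC)).
  refine (right_dini_le_weaken _ _ _ _ _ Hsum). cbv beta.
  apply lyapunov_rate_le.
Qed.

Definition weight_max := wE + wI + wR + wU + wS + wC.
Definition weight_min := Rmin (Rmin (Rmin wE wI) (Rmin wR wU)) (Rmin wS wC).

Lemma weight_min_pos : 0 < weight_min.
Proof.
  pose proof weights_pos as [PR [PU PI]]. pose proof wE_pos. pose proof wS_pos. pose proof wC_pos.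
  unfold weight_min. repeat apply Rmin_pos; assumption.
Qed.

Lemma weight_min_le : weight_min <= wE /\ weight_min <= wI /\ weight_min <= wR /\
  weight_min <= wU /\ weight_min <= wS /\ weight_min <= wC.
Proof.
  unfold weight_min.
  pose proof (Rmin_l (Rmin (Rmin wE wI) (Rmin wR wU)) (Rmin wS wC)).
  pose proof (Rmin_r (Rmin (Rmin wE wI) (Rmin wR wU)) (Rmin wS wC)).
  pose proof (Rmin_l (Rmin wE wI) (Rmin wR wU)). pose proof (Rmin_r (Rmin wE wI) (Rmin wR wU)).
  pose proof (Rmin_l wE wI). pose proof (Rmin_r wE wI). pose proof (Rmin_l wR wU).
  pose proof (Rmin_r wR wU). pose proof (Rmin_l wS wC). pose proof (Rmin_r wS wC).
  repeat split; lra.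
Qed.

Lemma weight_min_le_max : weight_min <= weight_max.
Proof.
  pose proof weights_pos as [PR [PU PI]]. pose proof wS_pos. pose proof wC_pos.
  pose proof weight_min_le as [M _]. unfold weight_max. lra.
Qed.

Lemma l1_dev_nonneg (X : state) : 0 <= l1_dev X.
Proof.
  unfold l1_dev. pose proof (Rabs_pos (sS X - Ndfe p)). pose proof (Rabs_pos (sE X)).
  pose proof (Rabs_pos (sI X)). pose proof (Rabs_pos (sR X)). pose proof (Rabs_pos (sU X)).
  pose proof (Rabs_pos (sC X)). lra.
Qed.

Lemma lyapunov_bounds (X : state) :
  weight_min * l1_dev X <= lyapunov X <= weight_max * l1_dev X.
Proof.
  pose proof weight_min_le as [M1 [M2 [M3 [M4 [M5 M6]]]]]. pose proof weight_min_pos.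
  unfold lyapunov, l1_dev, weight_max.
  set (mS := Rabs (sS X - Ndfe p)). set (mE := Rabs (sE X)). set (mI := Rabs (sI X)).
  set (mR := Rabs (sR X)). set (mU := Rabs (sU X)). set (mC := Rabs (sC X)).
  assert (0 <= mS /\ 0 <= mE /\ 0 <= mI /\ 0 <= mR /\ 0 <= mU /\ 0 <= mC) as [P1 [P2 [P3 [P4 [P5 P6]]]]]
    by (repeat split; apply Rabs_pos).
  split; nra.
Qed.

Lemma dist_E0_le_l1_dev (X : state) : dist_st X (E0 p) <= l1_dev X.
Proof.
  unfold dist_st, l1_dev, E0. simpl. fold (Ndfe p). rewrite !Rminus_0_r.
  pose proof (Rabs_pos (sS X - Ndfe p)). pose proof (Rabs_pos (sE X)).
  pose proof (Rabs_pos (sI X)). pose proof (Rabs_pos (sR X)). pose proof (Rabs_pos (sU X)).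
  pose proof (Rabs_pos (sC X)). repeat apply Rmax_lub; lra.
Qed.

Lemma l1_dev_lt (X : state) (r : R) : dist_st X (E0 p) < r -> l1_dev X < 6 * r.
Proof.
  intros Hd. rewrite E0_eq in Hd. apply dist_st_lt_iff in Hd. simpl in Hd. rewrite !Rminus_0_r in Hd.
  unfold l1_dev. lra.
Qed.

Lemma lyapunov_lipschitz (X Y : state) : Rabs (lyapunov X - lyapunov Y) <= weight_max * dist_st X Y.
Proof.
  pose proof weights_pos as [PR [PU PI]]. pose proof wE_pos. pose proof wS_pos. pose proof wC_pos.
  pose proof (dist_st_ge X Y) as [D1 [D2 [D3 [D4 [D5 D6]]]]].
  assert (Hd : forall u v, Rabs (u - v) <= dist_st X Y -> Rabs (Rabs u - Rabs v) <= dist_st X Y)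
    by (intros u v Huv; eapply Rle_trans; [apply Rabs_triang_inv2 | exact Huv]).
  replace (lyapunov X - lyapunov Y) with
    (wE * (Rabs (sE X) - Rabs (sE Y)) + wI * (Rabs (sI X) - Rabs (sI Y)) +
     wR * (Rabs (sR X) - Rabs (sR Y)) + wU * (Rabs (sU X) - Rabs (sU Y)) +
     wS * (Rabs (sS X - Ndfe p) - Rabs (sS Y - Ndfe p)) + wC * (Rabs (sC X) - Rabs (sC Y)))
    by (unfold lyapunov; ring).
  unfold weight_max. apply Rabs_lin_comb6_le; try lra; apply Hd; try assumption.
  replace (sS X - Ndfe p - (sS Y - Ndfe p)) with (sS X - sS Y) by ring. exact D1.
Qed.

Lemma lyapunov_decrease (x : R -> state) (a0 b L : R) : is_solution p x -> 0 <= a0 <= b ->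
  (forall s, a0 < s < b -> dist_st (x s) (E0 p) < rho_stable /\ L <= decay_rate * l1_dev (x s)) ->
  lyapunov (x b) <= lyapunov (x a0) - L * (b - a0).
Proof.
  intros Hx Hab Hnear.
  pose proof weight_min_pos. pose proof weight_min_le_max.
  destruct (lipschitz_along_solution lyapunov weight_max x Hx ltac:(lra) lyapunov_lipschitz)
    as [Hright Hcont].
  apply (right_dini_decrease (fun s => lyapunov (x s)));
    [lra | apply Hright; lra | intros c Hc; apply Hcont; lra |].
  intros s Hs. destruct (Hnear s Hs) as [Hd HL].
  apply right_dini_le_weaken with (- decay_rate * l1_dev (x s)); [lra|].
  apply lyapunov_right_dini; [exact Hx | lra | exact Hd].
Qed.

Lemma lyapunov_nonincreasing (x : R -> state) (a0 b : R) : is_solution p x -> 0 <= a0 <= b ->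
  (forall s, a0 < s < b -> dist_st (x s) (E0 p) < rho_stable) -> lyapunov (x b) <= lyapunov (x a0).
Proof.
  intros Hx Hab Hnear. pose proof decay_rate_pos.
  enough (lyapunov (x b) <= lyapunov (x a0) - 0 * (b - a0)) by lra.
  apply (lyapunov_decrease x a0 b 0 Hx Hab). intros s Hs. split; [now apply Hnear|].
  pose proof (l1_dev_nonneg (x s)). nra.
Qed.

Lemma dist_E0_lt_of_lyapunov (X : state) (r : R) :
  lyapunov X < weight_min * r -> dist_st X (E0 p) < r.
Proof.
  intros HV. pose proof (lyapunov_bounds X) as [Hlow _]. pose proof weight_min_pos.
  pose proof (dist_E0_le_l1_dev X).
  assert (l1_dev X < r) by (apply Rmult_lt_reg_l with weight_min; lra). lra.
Qed.

Lemma solution_stays_near (x : R -> state) (r : R) : is_solution p x -> 0 < r <= rho_stable ->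
  dist_st (x 0) (E0 p) < r * weight_min / (12 * weight_max) ->
  forall t, 0 <= t -> dist_st (x t) (E0 p) < r.
Proof.
  intros Hx Hr Hd0.
  pose proof weight_min_pos. pose proof weight_min_le_max.
  set (d := r * weight_min / (12 * weight_max)) in *.
  assert (Hd : d <= r / 12)
    by (unfold d; apply Rmult_le_reg_r with (12 * weight_max); [lra|];
        replace (r * weight_min / (12 * weight_max) * (12 * weight_max)) with (r * weight_min)
          by (field; lra);
        nra).
  assert (HV0 : lyapunov (x 0) < weight_min * (r / 2)).
  { pose proof (lyapunov_bounds (x 0)) as [_ Hup]. pose proof (l1_dev_lt (x 0) d Hd0).
    eapply Rle_lt_trans; [exact Hup|].
    replace (weight_min * (r / 2)) with (weight_max * (6 * d)) by (unfold d; field; lra).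
    apply Rmult_lt_compat_l; lra. }
  apply (real_induction 0 (fun s => dist_st (x s) (E0 p) < r)).
  - destruct (solution_right_continuous_dist x 0 Hx (Rle_refl 0) (r / 2) ltac:(lra)) as [d1 [Hd1 Hb]].
    exists d1. split; [exact Hd1|]. intros s Hs.
    pose proof (dist_st_triang (x s) (x 0) (E0 p)). specialize (Hb s Hs). lra.
  - intros c Hc Hbelow.
    assert (Hxc : dist_st (x c) (E0 p) < r / 2).
    { apply dist_E0_lt_of_lyapunov. eapply Rle_lt_trans; [|exact HV0].
      apply lyapunov_nonincreasing; [exact Hx | lra |]. intros s Hs.
      specialize (Hbelow s ltac:(lra)). lra. }
    destruct (solution_right_continuous_dist x c Hx ltac:(lra) (r / 2) ltac:(lra)) as [d1 [Hd1 Hb]].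
    exists d1. split; [exact Hd1|]. intros s Hs.
    destruct (Rlt_le_dec s c) as [Hsc | Hcs]; [apply Hbelow; lra|].
    pose proof (dist_st_triang (x s) (x c) (E0 p)). specialize (Hb s ltac:(lra)). lra.
Qed.

Lemma lyapunov_eventually_small (x : R -> state) (c : R) : is_solution p x -> 0 < c ->
  (forall t, 0 <= t -> dist_st (x t) (E0 p) < rho_stable) ->
  exists t1, 0 < t1 /\ lyapunov (x t1) < c.
Proof.
  intros Hx Hc Hnear. apply NNPP. intros Hnone.
  assert (Hbig : forall t, 0 < t -> c <= lyapunov (x t)).
  { intros t Ht. apply Rnot_lt_le. intros Hlt. apply Hnone. now exists t. }
  pose proof decay_rate_pos. pose proof weight_min_pos. pose proof weight_min_le_max.
  set (L := decay_rate * (c / weight_max)).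
  assert (HL : 0 < L) by (unfold L; apply Rmult_lt_0_compat; [lra | apply Rdiv_lt_0_compat; lra]).
  assert (HV0 : 0 <= lyapunov (x 0))
    by (pose proof (lyapunov_bounds (x 0)) as [Hlow _]; pose proof (l1_dev_nonneg (x 0)); nra).
  set (T := (lyapunov (x 0) + 1) / L).
  assert (HT : 0 < T) by (unfold T; apply Rdiv_lt_0_compat; lra).
  assert (HVT := lyapunov_decrease x 0 T L Hx ltac:(lra)).
  assert (lyapunov (x T) <= lyapunov (x 0) - L * (T - 0)).
  { apply HVT. intros s Hs. split; [apply Hnear; lra|].
    unfold L. apply Rmult_le_compat_l; [lra|].
    pose proof (lyapunov_bounds (x s)) as [_ Hup]. specialize (Hbig s ltac:(lra)).
    apply Rmult_le_reg_r with weight_max; [lra|].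
    unfold Rdiv. rewrite Rmult_assoc, Rinv_l by lra. lra. }
  assert (L * T = lyapunov (x 0) + 1) by (unfold T; field; lra).
  pose proof (Hbig T HT). lra.
Qed.

Theorem dfe_locally_asymptotically_stable : locally_asymptotically_stable p (E0 p).
Proof.
  pose proof weight_min_pos. pose proof weight_min_le_max. pose proof rho_stable_pos.
  assert (Hdelta : forall r, 0 < r -> 0 < r * weight_min / (12 * weight_max))
    by (intros r Hr; apply Rdiv_lt_0_compat; [apply Rmult_lt_0_compat|]; lra).
  split.
  - intros eps Heps. set (r := Rmin eps rho_stable).
    assert (Hr : 0 < r <= rho_stable) by (split; [apply Rmin_pos | apply Rmin_r]; lra).
    exists (r * weight_min / (12 * weight_max)). split; [apply Hdelta; lra|].
    intros x Hx Hx0 t Ht. apply Rlt_le_trans with r; [|apply Rmin_l].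
    exact (solution_stays_near x r Hx Hr Hx0 t Ht).
  - exists (rho_stable * weight_min / (12 * weight_max)). split; [now apply Hdelta|].
    intros x Hx Hx0 eps Heps.
    assert (Hnear : forall t, 0 <= t -> dist_st (x t) (E0 p) < rho_stable)
      by (apply solution_stays_near; [exact Hx | lra | exact Hx0]).
    destruct (lyapunov_eventually_small x (weight_min * eps) Hx ltac:(nra) Hnear) as [t1 [Ht1 HV1]].
    exists t1. intros t Ht. apply dist_E0_lt_of_lyapunov.
    eapply Rle_lt_trans; [|exact HV1].
    apply lyapunov_nonincreasing; [exact Hx | lra |]. intros s Hs. apply Hnear. lra.
Qed.

End Stability.

(** * A positively invariant box *)

(* Each bound balances the largest possible inflow of its compartment against its outflow, which
   makes the box positively invariant ([field_points_into_box]). *)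
Definition S_min := Lambda p / (beta p + delta p).
Definition E_max := beta p * Ndfe p / theta1 p.
Definition I_max := a p * E_max / theta2 p.
Definition U_max := gamma p * I_max / theta4 p.
Definition R_max := (gamma p * I_max + eta p * U_max) / theta3 p.
Definition C_max := (c1 p * E_max + c2 p * I_max + c3 p * R_max + c4 p * U_max) / delta5 p.

Definition in_box (X : state) :=
  S_min <= sS X <= Ndfe p /\ 0 <= sE X <= E_max /\ 0 <= sI X <= I_max /\
  0 <= sR X <= R_max /\ 0 <= sU X <= U_max /\ 0 <= sC X <= C_max.

Lemma box_bounds_pos : 0 < S_min /\ S_min <= Ndfe p /\ 0 < E_max /\ 0 < I_max /\
  0 < R_max /\ 0 < U_max /\ 0 < C_max.
Proof.
  pose proof Hp as P. red in P. pose proof theta_pos as [T1 [T2 [T3 T4]]]. pose proof Ndfe_pos.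
  assert (HS : S_min <= Ndfe p).
  { unfold S_min, Ndfe. apply Rmult_le_compat_l; [lra|]. apply Rinv_le_contravar; lra. }
  assert (HE : 0 < E_max) by (unfold E_max; apply Rdiv_lt_0_compat; nra).
  assert (HI : 0 < I_max) by (unfold I_max; apply Rdiv_lt_0_compat; nra).
  assert (HU : 0 < U_max) by (unfold U_max; apply Rdiv_lt_0_compat; nra).
  assert (HR : 0 < R_max) by (unfold R_max; apply Rdiv_lt_0_compat; nra).
  repeat split; try assumption.
  - unfold S_min. apply Rdiv_lt_0_compat; lra.
  - unfold C_max. apply Rdiv_lt_0_compat; nra.
Qed.

Lemma force_in_box (X : state) : in_box X -> 0 <= force p X <= beta p * sS X.
Proof.
  intros [B1 [B2 [B3 [B4 [B5 B6]]]]]. pose proof box_bounds_pos as [H0 _]. pose proof Hp as P. red in P.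
  assert (HN : 0 < totalN X) by (unfold totalN; lra).
  replace (force p X) with (beta p * sS X * (infected_load X / totalN X))
    by (unfold force, infected_load; field; lra).
  assert (0 <= infected_load X / totalN X) by (apply Rdiv_le_0_compat; unfold infected_load; lra).
  assert (infected_load X / totalN X <= 1)
    by (apply Rmult_le_reg_r with (totalN X); [lra|]; unfold Rdiv; rewrite Rmult_assoc, Rinv_l by lra;
        unfold infected_load, totalN; lra).
  assert (0 <= beta p * sS X) by (apply Rmult_le_pos; lra).
  split; nra.
Qed.

Definition box_lo (i : nat) : R := match i with 0%nat => S_min | _ => 0 end.
Definition box_hi (i : nat) : R :=
  match i with
  | 0%nat => Ndfe p | 1%nat => E_max | 2%nat => I_max | 3%nat => R_max | 4%nat => U_max | _ => C_max
  end.

Definition clamp_state (v : nat -> R) : state :=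
  mkState (clamp (box_lo 0) (box_hi 0) (v 0%nat)) (clamp (box_lo 1) (box_hi 1) (v 1%nat))
          (clamp (box_lo 2) (box_hi 2) (v 2%nat)) (clamp (box_lo 3) (box_hi 3) (v 3%nat))
          (clamp (box_lo 4) (box_hi 4) (v 4%nat)) (clamp (box_lo 5) (box_hi 5) (v 5%nat)).

(* Clamping to the box makes the field globally Lipschitz, as [picard_global_existence] requires;
   since the box is positively invariant, the clamp is never active along the solution it produces. *)
Definition truncated_field (v : nat -> R) (i : nat) : R :=
  match i with
  | 0%nat => fS p (clamp_state v) | 1%nat => fE p (clamp_state v) | 2%nat => fI p (clamp_state v)
  | 3%nat => fR p (clamp_state v) | 4%nat => fU p (clamp_state v) | _ => fC p (clamp_state v)
  end.

Lemma clamp_state_in_box (v : nat -> R) : in_box (clamp_state v).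
Proof.
  pose proof box_bounds_pos as [H0 [H1 [H2 [H3 [H4 [H5 H6]]]]]].
  unfold in_box, clamp_state; simpl. repeat split; apply clamp_in_range; lra.
Qed.

Definition J_max := I_max + U_max + R_max.
Definition N_max := Ndfe p + E_max + I_max + R_max + U_max + C_max.

Definition force_lipschitz :=
  beta p * (J_max * N_max + Ndfe p * N_max + Ndfe p * J_max) / (S_min * S_min).

Lemma force_lipschitz_nonneg : 0 <= force_lipschitz.
Proof.
  pose proof Hp as P. red in P. pose proof box_bounds_pos as [H0 [H1 [H2 [H3 [H4 [H5 H6]]]]]].
  unfold force_lipschitz, J_max, N_max. apply Rdiv_le_0_compat; [|nra].
  apply Rmult_le_pos; [lra|]. repeat apply Rplus_le_le_0_compat; apply Rmult_le_pos; lra.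
Qed.

Lemma force_lipschitz_in_box (X Y : state) (D : R) : in_box X -> in_box Y ->
  Rabs (sS X - sS Y) <= D -> Rabs (infected_load X - infected_load Y) <= D ->
  Rabs (totalN X - totalN Y) <= D -> Rabs (force p X - force p Y) <= force_lipschitz * D.
Proof.
  intros BX BY HS HJ HN. pose proof Hp as P. red in P.
  pose proof box_bounds_pos as [H0 [H1 [H2 [H3 [H4 [H5 H6]]]]]].
  pose proof BX as [X1 [X2 [X3 [X4 [X5 X6]]]]]. pose proof BY as [Y1 [Y2 [Y3 [Y4 [Y5 Y6]]]]].
  assert (Hq := Rabs_mult_div_sub_le (sS X) (infected_load X) (totalN X) (sS Y) (infected_load Y) (totalN Y)
    (Ndfe p) J_max S_min N_max D H0
    ltac:(lra) ltac:(lra) ltac:(unfold infected_load, J_max; lra) ltac:(unfold infected_load, J_max; lra)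
    ltac:(unfold totalN, N_max; lra) ltac:(unfold totalN, N_max; lra) HS HJ HN).
  replace (force p X - force p Y) with
    (beta p * (sS X * infected_load X / totalN X - sS Y * infected_load Y / totalN Y))
    by (unfold force, infected_load, Rdiv; ring).
  rewrite Rabs_mult, (Rabs_right (beta p)) by lra. unfold force_lipschitz.
  replace (beta p * (J_max * N_max + Ndfe p * N_max + Ndfe p * J_max) / (S_min * S_min) * D)
    with (beta p * ((J_max * N_max + Ndfe p * N_max + Ndfe p * J_max) / (S_min * S_min) * D))
    by (unfold Rdiv; ring).
  apply Rmult_le_compat_l; [lra | exact Hq].
Qed.

Definition field_lipschitz :=
  force_lipschitz + delta p + theta1 p + a p + theta2 p + gamma p + theta3 p + eta p + theta4 p +
  c1 p + c2 p + c3 p + c4 p + delta5 p.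

Lemma field_lipschitz_pos : 0 < field_lipschitz.
Proof.
  pose proof Hp as P. red in P. pose proof theta_pos. pose proof force_lipschitz_nonneg.
  unfold field_lipschitz. lra.
Qed.

Lemma clamp_state_diff_le (v w : nat -> R) :
  let X := clamp_state v in let Y := clamp_state w in
  let D := sum_f_R0 (fun j => Rabs (v j - w j)) 5 in
  Rabs (sS X - sS Y) <= D /\ Rabs (sE X - sE Y) <= D /\ Rabs (sI X - sI Y) <= D /\
  Rabs (sR X - sR Y) <= D /\ Rabs (sU X - sU Y) <= D /\ Rabs (sC X - sC Y) <= D /\
  Rabs (infected_load X - infected_load Y) <= D /\ Rabs (totalN X - totalN Y) <= D.
Proof.
  intros X Y D. pose proof box_bounds_pos as [H0 [H1 [H2 [H3 [H4 [H5 H6]]]]]].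
  pose proof (clamp_lipschitz S_min (Ndfe p) (v 0%nat) (w 0%nat) H1) as dS.
  pose proof (clamp_lipschitz 0 E_max (v 1%nat) (w 1%nat) ltac:(lra)) as dE.
  pose proof (clamp_lipschitz 0 I_max (v 2%nat) (w 2%nat) ltac:(lra)) as dI.
  pose proof (clamp_lipschitz 0 R_max (v 3%nat) (w 3%nat) ltac:(lra)) as dR.
  pose proof (clamp_lipschitz 0 U_max (v 4%nat) (w 4%nat) ltac:(lra)) as dU.
  pose proof (clamp_lipschitz 0 C_max (v 5%nat) (w 5%nat) ltac:(lra)) as dC.
  assert (HD : D = Rabs (v 0%nat - w 0%nat) + Rabs (v 1%nat - w 1%nat) + Rabs (v 2%nat - w 2%nat) +
                   Rabs (v 3%nat - w 3%nat) + Rabs (v 4%nat - w 4%nat) + Rabs (v 5%nat - w 5%nat))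
    by reflexivity.
  pose proof (Rabs_pos (v 0%nat - w 0%nat)). pose proof (Rabs_pos (v 1%nat - w 1%nat)).
  pose proof (Rabs_pos (v 2%nat - w 2%nat)). pose proof (Rabs_pos (v 3%nat - w 3%nat)).
  pose proof (Rabs_pos (v 4%nat - w 4%nat)). pose proof (Rabs_pos (v 5%nat - w 5%nat)).
  unfold X, Y, clamp_state, infected_load, totalN; simpl.
  repeat split; try lra.
  - match goal with |- Rabs (?a1 + ?a2 + ?a3 - (?b1 + ?b2 + ?b3)) <= _ =>
      replace (a1 + a2 + a3 - (b1 + b2 + b3)) with ((a1 - b1) + (a2 - b2) + (a3 - b3)) by ring;
      pose proof (Rabs_triang ((a1 - b1) + (a2 - b2)) (a3 - b3));
      pose proof (Rabs_triang (a1 - b1) (a2 - b2)) end.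
    lra.
  - match goal with |- Rabs (?a1 + ?a2 + ?a3 + ?a4 + ?a5 + ?a6 - (?b1 + ?b2 + ?b3 + ?b4 + ?b5 + ?b6)) <= _ =>
      replace (a1 + a2 + a3 + a4 + a5 + a6 - (b1 + b2 + b3 + b4 + b5 + b6))
        with ((a1 - b1) + (a2 - b2) + (a3 - b3) + (a4 - b4) + (a5 - b5) + (a6 - b6)) by ring;
      pose proof (Rabs_triang ((a1 - b1) + (a2 - b2) + (a3 - b3) + (a4 - b4) + (a5 - b5)) (a6 - b6));
      pose proof (Rabs_triang ((a1 - b1) + (a2 - b2) + (a3 - b3) + (a4 - b4)) (a5 - b5));
      pose proof (Rabs_triang ((a1 - b1) + (a2 - b2) + (a3 - b3)) (a4 - b4));
      pose proof (Rabs_triang ((a1 - b1) + (a2 - b2)) (a3 - b3));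
      pose proof (Rabs_triang (a1 - b1) (a2 - b2)) end.
    lra.
Qed.

Lemma truncated_field_lipschitz (v w : nat -> R) (i : nat) : (i <= 5)%nat ->
  Rabs (truncated_field v i - truncated_field w i) <=
  field_lipschitz * sum_f_R0 (fun j => Rabs (v j - w j)) 5.
Proof.
  intros Hi. pose proof Hp as P. red in P. pose proof theta_pos as [T1 [T2 [T3 T4]]].
  pose proof force_lipschitz_nonneg.
  destruct (clamp_state_diff_le v w) as [eS [eE [eI [eR [eU [eC [eJ eN]]]]]]].
  set (D := sum_f_R0 (fun j => Rabs (v j - w j)) 5) in *.
  set (X := clamp_state v) in *. set (Y := clamp_state w) in *.
  pose proof (force_lipschitz_in_box X Y D (clamp_state_in_box v) (clamp_state_in_box w) eS eJ eN) as eF.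
  assert (HD : 0 <= D) by (eapply Rle_trans; [apply Rabs_pos | exact eS]).
  assert (Hmul : forall k u, 0 <= k -> Rabs u <= D -> - (k * D) <= k * u <= k * D)
    by (intros k u Hk Hu; apply Rabs_le_between in Hu; split; nra).
  assert (Hnn : forall k, 0 <= k -> 0 <= k * D) by (intros; nra).
  pose proof (Hnn _ H). pose proof (Hnn (delta p) ltac:(lra)). pose proof (Hnn (theta1 p) ltac:(lra)).
  pose proof (Hnn (a p) ltac:(lra)). pose proof (Hnn (theta2 p) ltac:(lra)).
  pose proof (Hnn (gamma p) ltac:(lra)). pose proof (Hnn (theta3 p) ltac:(lra)).
  pose proof (Hnn (eta p) ltac:(lra)). pose proof (Hnn (theta4 p) ltac:(lra)).
  pose proof (Hnn (c1 p) ltac:(lra)). pose proof (Hnn (c2 p) ltac:(lra)).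
  pose proof (Hnn (c3 p) ltac:(lra)).
  pose proof (Hnn (c4 p) ltac:(lra)). pose proof (Hnn (delta5 p) ltac:(lra)).
  assert (HqD : gamma p * q p * D <= gamma p * D /\ gamma p * (1 - q p) * D <= gamma p * D) by (split; nra).
  apply Rabs_le_between in eF. apply Rabs_le. unfold field_lipschitz, truncated_field. fold X Y.
  destruct i as [|[|[|[|[|[|i]]]]]];
    [unfold fS | unfold fE | unfold fI | unfold fR | unfold fU | unfold fC | lia].
  - pose proof (Hmul (delta p) _ ltac:(lra) eS). lra.
  - pose proof (Hmul (theta1 p) _ ltac:(lra) eE). unfold theta1 in *. lra.
  - pose proof (Hmul (a p) _ ltac:(lra) eE). pose proof (Hmul (theta2 p) _ ltac:(lra) eI).
    unfold theta2 in *. lra.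
  - pose proof (Hmul (gamma p * q p) _ ltac:(nra) eI). pose proof (Hmul (theta3 p) _ ltac:(lra) eR).
    pose proof (Hmul (eta p) _ ltac:(lra) eU). unfold theta3 in *. lra.
  - pose proof (Hmul (gamma p * (1 - q p)) _ ltac:(nra) eI). pose proof (Hmul (theta4 p) _ ltac:(lra) eU).
    unfold theta4 in *. lra.
  - pose proof (Hmul (c1 p) _ ltac:(lra) eE). pose proof (Hmul (c2 p) _ ltac:(lra) eI).
    pose proof (Hmul (c3 p) _ ltac:(lra) eR). pose proof (Hmul (c4 p) _ ltac:(lra) eU).
    pose proof (Hmul (delta5 p) _ ltac:(lra) eC). lra.
Qed.

Lemma box_maxima_balance :
  (beta p + delta p) * S_min = Lambda p /\ delta p * Ndfe p = Lambda p /\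
  theta1 p * E_max = beta p * Ndfe p /\ theta2 p * I_max = a p * E_max /\
  theta4 p * U_max = gamma p * I_max /\ theta3 p * R_max = gamma p * I_max + eta p * U_max /\
  delta5 p * C_max = c1 p * E_max + c2 p * I_max + c3 p * R_max + c4 p * U_max.
Proof.
  pose proof Hp as P. red in P. pose proof theta_pos as [T1 [T2 [T3 T4]]].
  repeat split; [unfold S_min | unfold Ndfe | unfold E_max | unfold I_max | unfold U_max | unfold R_max
                | unfold C_max]; field; lra.
Qed.

Lemma field_points_into_box (X : state) : in_box X ->
  (sS X = S_min -> 0 <= fS p X) /\ (sS X = Ndfe p -> fS p X <= 0) /\
  (sE X = 0 -> 0 <= fE p X) /\ (sE X = E_max -> fE p X <= 0) /\
  (sI X = 0 -> 0 <= fI p X) /\ (sI X = I_max -> fI p X <= 0) /\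
  (sR X = 0 -> 0 <= fR p X) /\ (sR X = R_max -> fR p X <= 0) /\
  (sU X = 0 -> 0 <= fU p X) /\ (sU X = U_max -> fU p X <= 0) /\
  (sC X = 0 -> 0 <= fC p X) /\ (sC X = C_max -> fC p X <= 0).
Proof.
  intros B. pose proof Hp as P. red in P. pose proof (force_in_box X B) as [F1 F2].
  destruct B as [B1 [B2 [B3 [B4 [B5 B6]]]]].
  pose proof box_maxima_balance as [M1 [M2 [M3 [M4 [M5 [M6 M7]]]]]].
  assert (Hprod : forall k u m, 0 <= k -> 0 <= u <= m -> 0 <= k * u <= k * m)
    by (intros k u m Hk Hu; split; [apply Rmult_le_pos | apply Rmult_le_compat_l]; lra).
  assert (Hq : 0 <= gamma p * q p /\ 0 <= gamma p * (1 - q p)) by (split; apply Rmult_le_pos; lra).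
  pose proof (Hprod (beta p) (sS X) (Ndfe p) ltac:(lra) ltac:(pose proof box_bounds_pos; lra)).
  pose proof (Hprod (a p) _ _ ltac:(lra) B2). pose proof (Hprod (gamma p * q p) _ _ ltac:(lra) B3).
  pose proof (Hprod (gamma p * (1 - q p)) _ _ ltac:(lra) B3). pose proof (Hprod (eta p) _ _ ltac:(lra) B5).
  pose proof (Hprod (c1 p) _ _ ltac:(lra) B2). pose proof (Hprod (c2 p) _ _ ltac:(lra) B3).
  pose proof (Hprod (c3 p) _ _ ltac:(lra) B4). pose proof (Hprod (c4 p) _ _ ltac:(lra) B5).
  unfold fS, fE, fI, fR, fU, fC. fold (theta1 p) (theta2 p) (theta3 p).
  unfold theta4 in M5.
  repeat split; intros Hface; rewrite Hface in *; lra.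
Qed.

Lemma truncated_field_inward (v : nat -> R) (i : nat) : (i <= 5)%nat ->
  (v i < box_lo i -> 0 <= truncated_field v i) /\ (box_hi i < v i -> truncated_field v i <= 0).
Proof.
  intros Hi. pose proof box_bounds_pos as [H0 [H1 [H2 [H3 [H4 [H5 H6]]]]]].
  pose proof (field_points_into_box _ (clamp_state_in_box v)) as Hfaces.
  assert (Hlo : forall j, v j < box_lo j -> box_lo j <= box_hi j ->
                 clamp (box_lo j) (box_hi j) (v j) = box_lo j)
    by (intros j Hv Hj; now apply clamp_below).
  assert (Hhi : forall j, box_hi j < v j -> box_lo j <= box_hi j ->
                 clamp (box_lo j) (box_hi j) (v j) = box_hi j)
    by (intros j Hv Hj; now apply clamp_above).
  destruct Hfaces as [F1 [F2 [F3 [F4 [F5 [F6 [F7 [F8 [F9 [F10 [F11 F12]]]]]]]]]]].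
  destruct i as [|[|[|[|[|[|i]]]]]]; [| | | | | | lia]; split; intros Hv.
  - apply F1, (Hlo 0%nat Hv). simpl. lra.
  - apply F2, (Hhi 0%nat Hv). simpl. lra.
  - apply F3, (Hlo 1%nat Hv). simpl. lra.
  - apply F4, (Hhi 1%nat Hv). simpl. lra.
  - apply F5, (Hlo 2%nat Hv). simpl. lra.
  - apply F6, (Hhi 2%nat Hv). simpl. lra.
  - apply F7, (Hlo 3%nat Hv). simpl. lra.
  - apply F8, (Hhi 3%nat Hv). simpl. lra.
  - apply F9, (Hlo 4%nat Hv). simpl. lra.
  - apply F10, (Hhi 4%nat Hv). simpl. lra.
  - apply F11, (Hlo 5%nat Hv). simpl. lra.
  - apply F12, (Hhi 5%nat Hv). simpl. lra.
Qed.

Definition state_of (v : nat -> R) : state :=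
  mkState (v 0%nat) (v 1%nat) (v 2%nat) (v 3%nat) (v 4%nat) (v 5%nat).

Lemma solution_in_box (z : R) : 0 < z <= E_max ->
  exists x, is_solution p x /\ x 0 = mkState (Ndfe p) z 0 0 0 0 /\ forall t, 0 <= t -> in_box (x t).
Proof.
  intros Hz. pose proof box_bounds_pos as [H0 [H1 [H2 [H3 [H4 [H5 H6]]]]]].
  set (x0 := fun i => match i with 0%nat => Ndfe p | 1%nat => z | _ => 0 end).
  destruct (picard_global_existence 5 truncated_field field_lipschitz x0 field_lipschitz_pos
              truncated_field_lipschitz) as [X [HX0 [HXc HXd]]].
  assert (Hinv : forall i t, (i <= 5)%nat -> 0 <= t -> box_lo i <= X t i <= box_hi i).
  { intros i t Hi Ht.
    apply (interval_invariant (fun s => X s i) (fun s => truncated_field (X s) i)); [| | | | | exact Ht].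
    - intros s _. apply HXc, Hi.
    - intros s Hs. apply HXd; assumption.
    - intros s _ Hs. exact (proj1 (truncated_field_inward (X s) i Hi) Hs).
    - intros s _ Hs. exact (proj2 (truncated_field_inward (X s) i Hi) Hs).
    - rewrite HX0 by exact Hi.
      destruct i as [|[|[|[|[|[|i]]]]]]; simpl; [lra | lra | lra | lra | lra | lra | lia]. }
  assert (Hclamp : forall t, 0 <= t -> clamp_state (X t) = state_of (X t)).
  { intros t Ht. unfold clamp_state, state_of.
    rewrite !clamp_id by (apply Hinv; [lia | exact Ht]). reflexivity. }
  exists (fun t => state_of (X t)). split; [split | split].
  - intros t Ht. rewrite <- (Hclamp t) by lra.
    split; [|split; [|split; [|split; [|split]]]];
      [ exact (HXd t 0%nat Ht ltac:(lia)) | exact (HXd t 1%nat Ht ltac:(lia))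
      | exact (HXd t 2%nat Ht ltac:(lia)) | exact (HXd t 3%nat Ht ltac:(lia))
      | exact (HXd t 4%nat Ht ltac:(lia)) | exact (HXd t 5%nat Ht ltac:(lia)) ].
  - intros e He.
    destruct (state_continuous_dist (fun t => state_of (X t)) 0
                (HXc 0 0%nat ltac:(lia)) (HXc 0 1%nat ltac:(lia)) (HXc 0 2%nat ltac:(lia))
                (HXc 0 3%nat ltac:(lia)) (HXc 0 4%nat ltac:(lia)) (HXc 0 5%nat ltac:(lia)) e He)
      as [d [Hd Hb]].
    exists d. split; [exact Hd|]. intros t Ht. apply Hb. rewrite Rminus_0_r, Rabs_right; lra.
  - unfold state_of. rewrite !HX0 by lia. reflexivity.
  - intros t Ht. unfold in_box, state_of; simpl.
    pose proof (Hinv 0%nat t ltac:(lia) Ht). pose proof (Hinv 1%nat t ltac:(lia) Ht).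
    pose proof (Hinv 2%nat t ltac:(lia) Ht). pose proof (Hinv 3%nat t ltac:(lia) Ht).
    pose proof (Hinv 4%nat t ltac:(lia) Ht). pose proof (Hinv 5%nat t ltac:(lia) Ht).
    simpl in *. repeat split; lra.
Qed.

(** * Instability when [R0 > 1] *)

Section Instability.

Hypothesis HR0 : 1 < basic_R0 p.

Definition rho_unstable := (1 - ratio_bound) * Ndfe p / (1 + 6 * ratio_bound).
Definition growth_rate := Rmin (beta p * (basic_R0 p - 1) / 4) (theta1 p * (basic_R0 p - 1) / 2).
Definition infected_weight (X : state) := wE * sE X + wI * sI X + wR * sR X + wU * sU X.
Definition infected_weight_sum := wE + wI + wR + wU.

Lemma ratio_bound_lt_1 : ratio_bound < 1.
Proof.
  pose proof ratio_bound_sub_1.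
  assert ((1 - basic_R0 p) / (2 * (1 + basic_R0 p)) < 0)
    by (unfold Rdiv; apply Rmult_neg_pos; [lra | apply Rinv_0_lt_compat; lra]). lra.
Qed.

Lemma rho_unstable_pos : 0 < rho_unstable.
Proof.
  pose proof ratio_bound_lt_1. pose proof ratio_bound_pos. pose proof Ndfe_pos.
  unfold rho_unstable. apply Rdiv_lt_0_compat; nra.
Qed.

Lemma growth_rate_pos : 0 < growth_rate.
Proof.
  pose proof Hp as P. red in P. pose proof theta_pos as [T1 _].
  unfold growth_rate. apply Rmin_pos; nra.
Qed.

Lemma infected_weight_sum_pos : 0 < infected_weight_sum.
Proof. pose proof weights_pos as [PR [PU PI]]. pose proof wE_pos. unfold infected_weight_sum. lra. Qed.

Lemma infected_weight_rate_ge (X : state) : in_box X -> dist_st X (E0 p) < rho_unstable ->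
  growth_rate * (sE X + sI X + sR X + sU X) <= wE * fE p X + wI * fI p X + wR * fR p X + wU * fU p X.
Proof.
  intros B Hnear. pose proof Hp as P. red in P. pose proof theta_pos as [T1 _].
  pose proof B as [B1 [B2 [B3 [B4 [B5 B6]]]]].
  pose proof box_bounds_pos as [H0 _]. pose proof ratio_bound_lt_1. pose proof ratio_bound_pos.
  assert (Hratio := S_over_N_ge X (Ndfe p) ratio_bound Ndfe_pos ltac:(lra)
    ltac:(lra) ltac:(lra) ltac:(lra) ltac:(lra) ltac:(lra) Hnear).
  assert (HJ : 0 <= infected_load X) by (unfold infected_load; lra).
  assert (HF : beta p * ratio_bound * infected_load X <= force p X).
  { rewrite force_eq. apply Rmult_le_compat_r; [exact HJ|]. apply Rmult_le_compat_l; lra. }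
  rewrite weighted_infected_derivative.
  assert (wE * (beta p * ratio_bound * infected_load X) = (3 + basic_R0 p) / 4 * beta p * infected_load X)
    by (replace (wE * (beta p * ratio_bound * infected_load X))
          with (wE * ratio_bound * beta p * infected_load X) by ring; rewrite wE_ratio_bound; ring).
  assert (wE * (beta p * ratio_bound * infected_load X) <= wE * force p X)
    by (apply Rmult_le_compat_l; [pose proof wE_pos; lra | exact HF]).
  assert (growth_rate * sE X <= theta1 p * (basic_R0 p - 1) / 2 * sE X)
    by (apply Rmult_le_compat_r; [lra | apply Rmin_r]).
  assert (growth_rate * infected_load X <= beta p * (basic_R0 p - 1) / 4 * infected_load X)
    by (apply Rmult_le_compat_r; [exact HJ | apply Rmin_l]).
  unfold infected_load, wE in *. lra.
Qed.

Lemma infected_weight_bounds (X : state) : in_box X ->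
  0 <= infected_weight X <= infected_weight_sum * (sE X + sI X + sR X + sU X).
Proof.
  intros [B1 [B2 [B3 [B4 [B5 B6]]]]]. pose proof weights_pos as [PR [PU PI]]. pose proof wE_pos.
  unfold infected_weight, infected_weight_sum. split; nra.
Qed.

Lemma infected_weight_lipschitz (X Y : state) :
  Rabs (infected_weight X - infected_weight Y) <= infected_weight_sum * dist_st X Y.
Proof.
  pose proof weights_pos as [PR [PU PI]]. pose proof wE_pos.
  pose proof (dist_st_ge X Y) as [D1 [D2 [D3 [D4 [D5 D6]]]]].
  replace (infected_weight X - infected_weight Y) with
    (wE * (sE X - sE Y) + wI * (sI X - sI Y) + wR * (sR X - sR Y) + wU * (sU X - sU Y) + 0 * 0 + 0 * 0)
    by (unfold infected_weight; ring).
  replace (infected_weight_sum * dist_st X Y) with ((wE + wI + wR + wU + 0 + 0) * dist_st X Y)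
    by (unfold infected_weight_sum; ring).
  apply Rabs_lin_comb6_le; try lra; try assumption.
  all: rewrite Rabs_R0; eapply Rle_trans; [apply Rabs_pos | exact D1].
Qed.

Lemma is_derive_infected_weight (x : R -> state) (t : R) : is_solution p x -> 0 < t ->
  is_derive (fun s => infected_weight (x s)) t
    (wE * fE p (x t) + wI * fI p (x t) + wR * fR p (x t) + wU * fU p (x t)).
Proof.
  intros [Hder _] Ht. destruct (Hder t Ht) as [_ [DE [DI [DR [DU _]]]]].
  unfold infected_weight.
  apply (is_derive_plus (fun s => wE * sE (x s) + wI * sI (x s) + wR * sR (x s)));
    [|now apply is_derive_scal].
  apply (is_derive_plus (fun s => wE * sE (x s) + wI * sI (x s))); [|now apply is_derive_scal].
  apply (is_derive_plus (fun s => wE * sE (x s))); now apply is_derive_scal.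
Qed.

Lemma infected_weight_grows (x : R -> state) : is_solution p x ->
  (forall t, 0 <= t -> in_box (x t) /\ dist_st (x t) (E0 p) < rho_unstable) ->
  forall t, 0 <= t ->
  infected_weight (x 0) * (1 + growth_rate / infected_weight_sum * t) <= infected_weight (x t).
Proof.
  intros Hx Hinside. pose proof infected_weight_sum_pos. pose proof growth_rate_pos.
  apply (linear_growth (fun s => infected_weight (x s))); [apply Rdiv_lt_0_compat; lra | | |].
  - apply (lipschitz_along_solution infected_weight infected_weight_sum x Hx);
      [lra | apply infected_weight_lipschitz | lra].
  - intros s Hs. destruct (Hinside s ltac:(lra)) as [Hbox Hnear].
    eexists. split; [apply is_derive_infected_weight; [exact Hx | exact Hs]|].
    eapply Rle_trans; [|apply infected_weight_rate_ge; [exact Hbox | exact Hnear]].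
    pose proof (infected_weight_bounds (x s) Hbox) as [_ Hup].
    apply Rmult_le_reg_r with infected_weight_sum; [lra|].
    replace (growth_rate / infected_weight_sum * infected_weight (x s) * infected_weight_sum)
      with (growth_rate * infected_weight (x s)) by (field; lra).
    pose proof (Rmult_le_compat_l growth_rate _ _ ltac:(lra) Hup). nra.
  - intros s Hs. apply (infected_weight_bounds (x s)), Hinside, Hs.
Qed.

Lemma infected_weight_le_near (X : state) (r : R) : in_box X -> dist_st X (E0 p) < r ->
  infected_weight X <= infected_weight_sum * (4 * r).
Proof.
  intros Hbox Hnear. pose proof infected_weight_sum_pos.
  pose proof (infected_weight_bounds X Hbox) as [_ Hup]. pose proof Hbox as [_ [B2 [B3 [B4 [B5 _]]]]].
  rewrite E0_eq in Hnear. apply dist_st_lt_iff in Hnear. simpl in Hnear. rewrite !Rminus_0_r in Hnear.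
  destruct Hnear as [_ [N2 [N3 [N4 [N5 _]]]]]. rewrite Rabs_right in N2, N3, N4, N5 by lra.
  eapply Rle_trans; [exact Hup|]. apply Rmult_le_compat_l; lra.
Qed.

Theorem dfe_unstable : unstable p (E0 p).
Proof.
  intros Hstab. pose proof box_bounds_pos as [_ [_ [HE _]]]. pose proof wE_pos.
  pose proof infected_weight_sum_pos. pose proof growth_rate_pos. pose proof rho_unstable_pos.
  destruct (Hstab rho_unstable rho_unstable_pos) as [d [Hd Hstay]].
  set (z := Rmin (d / 2) E_max).
  assert (Hz : 0 < z <= E_max) by (split; [apply Rmin_pos; lra | apply Rmin_r]).
  destruct (solution_in_box z Hz) as [x [Hx [Hx0 Hbox]]].
  assert (Hnear : forall t, 0 <= t -> dist_st (x t) (E0 p) < rho_unstable).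
  { apply Hstay; [exact Hx|]. rewrite Hx0, E0_eq. apply dist_st_lt_iff. simpl.
    rewrite !Rminus_0_r, Rminus_eq_0, Rabs_R0, Rabs_right by lra.
    assert (z <= d / 2) by apply Rmin_l. repeat split; lra. }
  set (k := growth_rate / infected_weight_sum).
  assert (Hk : 0 < k) by (apply Rdiv_lt_0_compat; lra).
  assert (HW0 : 0 < infected_weight (x 0)).
  { replace (infected_weight (x 0)) with (wE * z) by (rewrite Hx0; unfold infected_weight; simpl; ring).
    apply Rmult_lt_0_compat; lra. }
  set (c := infected_weight (x 0) * k).
  assert (Hc : 0 < c) by (apply Rmult_lt_0_compat; lra).
  set (T := infected_weight_sum * (4 * rho_unstable) / c).
  assert (HT : 0 <= T) by (unfold T; apply Rdiv_le_0_compat; [apply Rmult_le_pos | exact Hc]; lra).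
  pose proof (infected_weight_grows x Hx (fun t Ht => conj (Hbox t Ht) (Hnear t Ht)) T HT) as Hgrow.
  pose proof (infected_weight_le_near (x T) rho_unstable (Hbox T HT) (Hnear T HT)).
  assert (c * T = infected_weight_sum * (4 * rho_unstable)) by (unfold T; field; lra).
  fold k in Hgrow. unfold c in *. lra.
Qed.

End Instability.
End SEIRUC.

Theorem theorem3 (p : params) (Hp : admissible p) :
  (basic_R0 p < 1 -> locally_asymptotically_stable p (E0 p)) /\
  (basic_R0 p > 1 -> unstable p (E0 p)).
Proof.
  split; intros HR0.
  - exact (dfe_locally_asymptotically_stable p Hp HR0).
  - exact (dfe_unstable p Hp HR0).
Qed.
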